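(* For system (3): (i) if $1<\mathscr{R}_0<1+\frac{\sigma_m(\mu+r)}{\mu\beta}C_I$, then $E^*$ is locally asymptotically stable; (ii) whenever $E_1^*$ is an endemic equilibrium and $S_1^*\neq S_2^*$, $E_1^*$ is locally asymptotically stable; (iii) whenever $E_2^*$ is an endemic equilibrium and $S_1^*\ne S_2^*$, $E_2^*$ is unstable.
   Context: Let $A,\sigma_m,\sigma_s,\mu,\rho,\beta,r,C_I$ be positive constants. Write $[x]^+=\max\{0,x\}$ and $T(I_s)=rI_s$ if $I_s<C_I$, $T(I_s)=rC_I$ if $I_s\ge C_I$. System (3) is $$S'=A-\sigma_mSI_m-\sigma_sS[I_s-C_I]^+-\mu S,\quad I_m'=\sigma_mSI_m+\sigma_sS[I_s-C_I]^+-(\mu+\rho+\beta)I_m,\quad I_s'=\beta I_m-T(I_s)-\mu I_s.$$ $\mathscr{R}_0=\frac{A\sigma_m}{\mu(\mu+\beta+\rho)}$. An endemic equilibrium is an equilibrium of (3) with $S,I_m,I_s>0$. $E^*=(S^*,I_m^*,I_s^* )$ with $S^*=\frac{\mu+\beta+\rho}{\sigma_m}$, $I_m^*=\frac{\mu(\mathscr{R}_0-1)}{\sigma_m}$, $I_s^*=\frac{\mu\beta(\mathscr{R}_0-1)}{\sigma_m(\mu+r)}$. Let $p=\frac{(\mu+r)\sigma_m\sigma_sC_I}{\mu(\mu\sigma_m+\beta\sigma_s)}$, $q=\frac{\mu\sigma_m}{\mu\sigma_m+\beta\sigma_s}$, and $S_{1,2}^*=\frac{\mu+\beta+\rho}{2\sigma_m}\big\{\mathscr{R}_0-p+q\mp\sqrt{(\mathscr{R}_0-p-q)^2-4pq}\big\}$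 (minus sign for $S_1^*$, plus for $S_2^*$), $I_{m_i}^*=\frac{\mu\mathscr{R}_0}{\sigma_m}-\frac{\mu S_i^*}{\mu+\beta+\rho}$, $I_{s_i}^*=\frac{\beta\mathscr{R}_0}{\sigma_m}-\frac{\beta S_i^*}{\mu+\beta+\rho}-\frac{rC_I}{\mu}$, $E_i^*=(S_i^*,I_{m_i}^*,I_{s_i}^* )$, $i=1,2$. ''$E_i^*$ is an endemic equilibrium'' means $S_i^*$ is real, $S_i^*>0$, $I_{m_i}^*>0$ and $I_{s_i}^*>C_I$. The right-hand side of (3) is smooth near each of these equilibria (which lie off the plane $I_s=C_I$), so stability refers to the usual local asymptotic stability/instability of equilibria. *)

From Stdlib Require Import Reals Lra.
From Coquelicot Require Import Coquelicot.
Open Scope R_scope.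

Record Params := mkParams {
  pA : R; psm : R; pss : R; pmu : R; prho : R; pbeta : R; pr : R; pCI : R }.

Definition params_pos (P : Params) : Prop :=
  0 < pA P /\ 0 < psm P /\ 0 < pss P /\ 0 < pmu P /\ 0 < prho P /\
  0 < pbeta P /\ 0 < pr P /\ 0 < pCI P.

Definition posp (x : R) : R := Rmax 0 x.

Definition Tr (P : Params) (Is : R) : R :=
  if Rlt_dec Is (pCI P) then pr P * Is else pr P * pCI P.

Definition fS (P : Params) (S Im Is : R) : R :=
  pA P - psm P * S * Im - pss P * S * posp (Is - pCI P) - pmu P * S.
Definition fIm (P : Params) (S Im Is : R) : R :=
  psm P * S * Im + pss P * S * posp (Is - pCI P) - (pmu P + prho P + pbeta P) * Im.
Definition fIs (P : Params) (S Im Is : R) : R :=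
  pbeta P * Im - Tr P Is - pmu P * Is.

(* A (forward) solution of (3) on [0, +oo): differentiable at every t >= 0
   (a two-sided derivative at t = 0 is harmless: any forward solution can be
   extended to t < 0 by x(0) + t x'(0)). *)
Definition is_solution (P : Params) (S Im Is : R -> R) : Prop :=
  forall t, 0 <= t ->
    is_derive S t (fS P (S t) (Im t) (Is t)) /\
    is_derive Im t (fIm P (S t) (Im t) (Is t)) /\
    is_derive Is t (fIs P (S t) (Im t) (Is t)).

Definition dist3 (a b c a' b' c' : R) : R :=
  sqrt ((a - a') ^ 2 + (b - b') ^ 2 + (c - c') ^ 2).

Definition point := (R * R * R)%type.

Definition lyap_stable (P : Params) (E : point) : Prop :=
  let '(Se, Ime, Ise) := E in
  forall eps, 0 < eps -> exists delta, 0 < delta /\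
    forall S0 Im0 Is0, dist3 S0 Im0 Is0 Se Ime Ise < delta ->
      (exists S Im Is, is_solution P S Im Is /\
          S 0 = S0 /\ Im 0 = Im0 /\ Is 0 = Is0) /\
      (forall S Im Is, is_solution P S Im Is ->
          S 0 = S0 -> Im 0 = Im0 -> Is 0 = Is0 ->
          forall t, 0 <= t -> dist3 (S t) (Im t) (Is t) Se Ime Ise < eps).

Definition attractive (P : Params) (E : point) : Prop :=
  let '(Se, Ime, Ise) := E in
  exists delta, 0 < delta /\
    forall S Im Is, is_solution P S Im Is ->
      dist3 (S 0) (Im 0) (Is 0) Se Ime Ise < delta ->
      is_lim (fun t => dist3 (S t) (Im t) (Is t) Se Ime Ise) p_infty 0.

Definition loc_asym_stable (P : Params) (E : point) : Prop :=
  lyap_stable P E /\ attractive P E.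

Definition unstable (P : Params) (E : point) : Prop := ~ lyap_stable P E.

Definition Rnum (P : Params) : R :=
  pA P * psm P / (pmu P * (pmu P + pbeta P + prho P)).

Definition Estar (P : Params) : point :=
  ((pmu P + pbeta P + prho P) / psm P,
   pmu P * (Rnum P - 1) / psm P,
   pmu P * pbeta P * (Rnum P - 1) / (psm P * (pmu P + pr P))).

Definition pp (P : Params) : R :=
  (pmu P + pr P) * psm P * pss P * pCI P /
  (pmu P * (pmu P * psm P + pbeta P * pss P)).
Definition qq (P : Params) : R :=
  pmu P * psm P / (pmu P * psm P + pbeta P * pss P).

Definition disc (P : Params) : R :=
  (Rnum P - pp P - qq P) ^ 2 - 4 * pp P * qq P.

(* S_1^* (minus sign) and S_2^* (plus sign); meaningful when disc P >= 0 *)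
Definition Sone (P : Params) : R :=
  (pmu P + pbeta P + prho P) / (2 * psm P) *
  (Rnum P - pp P + qq P - sqrt (disc P)).
Definition Stwo (P : Params) : R :=
  (pmu P + pbeta P + prho P) / (2 * psm P) *
  (Rnum P - pp P + qq P + sqrt (disc P)).

Definition Im_of (P : Params) (S : R) : R :=
  pmu P * Rnum P / psm P - pmu P * S / (pmu P + pbeta P + prho P).
Definition Is_of (P : Params) (S : R) : R :=
  pbeta P * Rnum P / psm P - pbeta P * S / (pmu P + pbeta P + prho P)
  - pr P * pCI P / pmu P.

Definition Eone (P : Params) : point := (Sone P, Im_of P (Sone P), Is_of P (Sone P)).
Definition Etwo (P : Params) : point := (Stwo P, Im_of P (Stwo P), Is_of P (Stwo P)).

(* "E_i^* is an endemic equilibrium": S_i^* real (discriminant >= 0),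
   S_i^* > 0, I_mi^* > 0, I_si^* > C_I. *)
Definition endemic_Ei (P : Params) (S : R) : Prop :=
  0 <= disc P /\ 0 < S /\ 0 < Im_of P S /\ pCI P < Is_of P S.

From Pilot Require Import Defs.
From Stdlib Require Import Reals Lra Lia Psatz Classical.
From Coquelicot Require Import Coquelicot.
Open Scope R_scope.

(* Near each equilibrium, in the coordinates N = S + I_m, I_m and u (u = I_s below the capacity C_I,
   u = beta N + (beta + rho) I_s above it), system (3) is block-triangular up to quadratic terms: a planar
   linear system with matrix B, coupled one way to a stable scalar equation for u.  A weighted sum of
   det B |v|^2 + |adj B v|^2 and u^2 is then a strict Lyapunov function when det B > 0 (the trace is
   always negative) and, with the weight of u^2 negated, a Chetaev function when det B < 0.  At E^* the
   determinant is positive automatically.  At E_i one finds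
     det B * S_i = (mu + beta + rho) A - (mu sigma_m + beta sigma_s) S_i^2
                 = (mu sigma_m + beta sigma_s) S_i (S_j - S_i),
   since S_1 S_2 = (mu + beta + rho) A / (mu sigma_m + beta sigma_s); so E_1 is stable and E_2 unstable.
   Stability in the sense used here also asks for global forward solutions; they are obtained by Picard
   iteration for the field clamped to a box around the equilibrium, which the Lyapunov function never
   lets the solution leave. *)

Lemma continuous_of_lipschitz (f : R -> R) K x :
  (forall y, Rabs (f y - f x) <= K * Rabs (y - x)) -> continuous f x.
Proof.
  intros H. apply continuity_pt_filterlim.
  unfold continuity_pt, continue_in, limit1_in, limit_in; simpl.
  intros eps Heps. exists (eps / (Rabs K + 1)). split.
  { apply Rdiv_lt_0_compat; [lra | pose proof (Rabs_pos K); lra]. }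
  intros y [_ Hy]. unfold R_dist in *. specialize (H y).
  pose proof (Rabs_pos K). pose proof (Rabs_pos (y - x)). pose proof (Rle_abs K).
  assert (Rabs (y - x) * (Rabs K + 1) < eps).
  { apply Rmult_lt_compat_r with (r := Rabs K + 1) in Hy; [|lra].
    unfold Rdiv in Hy. rewrite Rmult_assoc, Rinv_l in Hy; lra. }
  nra.
Qed.

Lemma ex_RInt_of_continuous (f : R -> R) a b : (forall x, continuous f x) -> ex_RInt f a b.
Proof. intros H. apply (@ex_RInt_continuous R_CompleteNormedModule). intros; apply H. Qed.

Lemma RInt_minus_continuous (f g : R -> R) a b :
  (forall x, continuous f x) -> (forall x, continuous g x) ->
  RInt (fun s => f s - g s) a b = RInt f a b - RInt g a b.
Proof. intros. apply (@RInt_minus R_CompleteNormedModule); apply ex_RInt_of_continuous; auto. Qed.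

Lemma RInt_0_minus (f : R -> R) a b :
  (forall x, continuous f x) -> RInt f 0 a - RInt f 0 b = RInt f b a.
Proof.
  intros H. rewrite <- (@RInt_Chasles R_CompleteNormedModule f 0 b a)
    by (apply ex_RInt_of_continuous; auto).
  unfold plus; simpl. ring.
Qed.

Lemma abs_RInt_le_between (f : R -> R) a b B :
  (forall x, continuous f x) -> (forall s, Rmin a b <= s <= Rmax a b -> Rabs (f s) <= B) ->
  Rabs (RInt f a b) <= B * Rabs (b - a).
Proof.
  intros Hc HB. rewrite Rmult_comm.
  apply (norm_RInt_le_const_abs (V := R_NormedModule) f a b); auto.
  apply (@RInt_correct R_CompleteNormedModule). apply ex_RInt_of_continuous; auto.
Qed.

Lemma RInt_exp (A K t : R) : K <> 0 ->
  RInt (fun s => A * exp (K * s)) 0 t = A * (exp (K * t) - 1) / K.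
Proof.
  intros HK. apply is_RInt_unique.
  replace (A * (exp (K * t) - 1) / K) with (minus (A * exp (K * t) / K) (A * exp (K * 0) / K)).
  - apply (@is_RInt_derive R_CompleteNormedModule (fun s => A * exp (K * s) / K)).
    + intros x _. auto_derive; auto. field; auto.
    + intros x _. apply (ex_derive_continuous (V := R_NormedModule)). auto_derive. auto.
  - unfold minus, plus, opp; simpl. rewrite Rmult_0_r, exp_0. field; auto.
Qed.

Lemma abs_RInt_le_exp (f : R -> R) A K t : 0 <= t -> 0 < K -> 0 <= A ->
  (forall x, continuous f x) -> (forall s, 0 <= s <= t -> Rabs (f s) <= A * exp (K * s)) ->
  Rabs (RInt f 0 t) <= A * exp (K * t) / K.
Proof.
  intros Ht HK HA Hc Hb.
  assert (Hexp : forall x, continuous (fun s => A * exp (K * s)) x).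
  { intros x. apply (ex_derive_continuous (V := R_NormedModule)). auto_derive. auto. }
  eapply Rle_trans. { apply abs_RInt_le; auto. apply ex_RInt_of_continuous; auto. }
  eapply Rle_trans.
  { apply (RInt_le _ (fun s => A * exp (K * s))); auto.
    - apply ex_RInt_of_continuous. intros x. apply continuous_Rabs_comp. apply Hc.
    - apply ex_RInt_of_continuous; auto.
    - intros x Hx. apply Hb; lra. }
  rewrite RInt_exp by lra. apply Rmult_le_compat_r.
  - left; apply Rinv_0_lt_compat; lra.
  - pose proof (exp_pos (K * t)). nra.
Qed.

Lemma le_of_le_geometric a b K : 0 <= K -> (forall n, a <= b + K * (/2) ^ n) -> a <= b.
Proof.
  intros HK H. apply Rle_plus_epsilon. intros eps Heps.
  destruct (pow_lt_1_zero (/2) ltac:(rewrite Rabs_right; lra) (eps / (K + 1))) as [N HN].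
  { apply Rdiv_lt_0_compat; lra. }
  specialize (HN N (le_n _)). specialize (H N).
  rewrite Rabs_right in HN by (left; apply pow_lt; lra).
  assert (K * (/2) ^ N <= eps).
  { apply Rmult_lt_compat_r with (r := K + 1) in HN; [|lra].
    unfold Rdiv in HN. rewrite Rmult_assoc, Rinv_l in HN by lra.
    pose proof (pow_lt (/2) N ltac:(lra)). nra. }
  lra.
Qed.

Lemma Rmax0_lipschitz s s' : Rabs (Rmax 0 s - Rmax 0 s') <= Rabs (s - s').
Proof.
  unfold Rmax; destruct (Rle_dec 0 s), (Rle_dec 0 s'); unfold Rabs; repeat destruct Rcase_abs; lra.
Qed.

Lemma Rabs_triang3 a b c : Rabs (a + b - c) <= Rabs a + Rabs b + Rabs c.
Proof. unfold Rabs; repeat destruct Rcase_abs; lra. Qed.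

(** * Picard iteration *)

Definition l1_dist (x y : nat -> R) : R :=
  Rabs (x 0%nat - y 0%nat) + Rabs (x 1%nat - y 1%nat) + Rabs (x 2%nat - y 2%nat).

Section Picard.

Variables (G : nat -> (nat -> R) -> R) (L M : R) (x0 : nat -> R).
Hypothesis L_pos : 0 < L.
Hypothesis M_nonneg : 0 <= M.
Hypothesis G_lipschitz : forall i x y, Rabs (G i x - G i y) <= L * l1_dist x y.
Hypothesis G_bounded : forall i x, Rabs (G i x) <= M.

(* Freezing the integrand at [s = 0] for [s < 0] lets everything live on the whole line. *)
Definition flow_integrand (X : nat -> R -> R) (i : nat) (s : R) : R :=
  G i (fun j => X j (Rmax 0 s)).

Fixpoint picard (n : nat) : nat -> R -> R :=
  match n with
  | O => fun i _ => x0 i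
  | S n => fun i t => x0 i + RInt (flow_integrand (picard n) i) 0 t
  end.

Definition time_lipschitz (X : nat -> R -> R) : Prop :=
  forall j t s, (j < 3)%nat -> Rabs (X j t - X j s) <= M * Rabs (t - s).

Lemma G_depends_on_first_three i x y :
  x 0%nat = y 0%nat -> x 1%nat = y 1%nat -> x 2%nat = y 2%nat -> G i x = G i y.
Proof.
  intros H0 H1 H2. pose proof (G_lipschitz i x y) as H. unfold l1_dist in H.
  rewrite H0, H1, H2, !Rminus_diag, !Rabs_R0, !Rplus_0_r, Rmult_0_r in H.
  pose proof (Rabs_pos (G i x - G i y)).
  apply Rminus_diag_uniq, Rabs_eq_0. lra.
Qed.

Lemma flow_integrand_continuous X i x : time_lipschitz X -> continuous (flow_integrand X i) x.
Proof.
  intros HX. apply (continuous_of_lipschitz _ (3 * L * M)). intros y.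
  eapply Rle_trans; [apply G_lipschitz|]. unfold l1_dist.
  pose proof (Rmax0_lipschitz y x).
  pose proof (HX 0%nat (Rmax 0 y) (Rmax 0 x) ltac:(lia)).
  pose proof (HX 1%nat (Rmax 0 y) (Rmax 0 x) ltac:(lia)).
  pose proof (HX 2%nat (Rmax 0 y) (Rmax 0 x) ltac:(lia)).
  assert (M * Rabs (Rmax 0 y - Rmax 0 x) <= M * Rabs (y - x)) by (apply Rmult_le_compat_l; lra).
  apply Rle_trans with (L * (3 * (M * Rabs (y - x)))); [apply Rmult_le_compat_l; lra | lra].
Qed.

Lemma picard_time_lipschitz n : time_lipschitz (picard n).
Proof.
  induction n; intros j t s Hj; simpl.
  - rewrite Rminus_diag, Rabs_R0. pose proof (Rabs_pos (t - s)); nra.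
  - replace (x0 j + RInt (flow_integrand (picard n) j) 0 t - (x0 j + RInt (flow_integrand (picard n) j) 0 s))
      with (RInt (flow_integrand (picard n) j) 0 t - RInt (flow_integrand (picard n) j) 0 s) by ring.
    rewrite RInt_0_minus by (intros; apply flow_integrand_continuous; auto).
    apply abs_RInt_le_between; [intros; apply flow_integrand_continuous; auto|].
    intros; apply G_bounded.
Qed.

Lemma picard_at_0 n j : picard n j 0 = x0 j.
Proof. destruct n; simpl; auto. rewrite RInt_point. unfold zero; simpl; ring. Qed.

Definition picard_gap (n : nat) (t : R) : R :=
  Rabs (picard (S n) 0%nat t - picard n 0%nat t) + Rabs (picard (S n) 1%nat t - picard n 1%nat t)
  + Rabs (picard (S n) 2%nat t - picard n 2%nat t).

Definition tail_bound (n : nat) (t : R) : R := M / L * (/2) ^ n * exp (6 * L * Rabs t).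

Lemma tail_bound_nonneg n t : 0 <= tail_bound n t.
Proof.
  unfold tail_bound. pose proof (exp_pos (6 * L * Rabs t)). pose proof (pow_lt (/2) n ltac:(lra)).
  assert (0 <= M / L) by (apply Rmult_le_pos; [lra | left; apply Rinv_0_lt_compat; lra]).
  apply Rmult_le_pos; [apply Rmult_le_pos|]; lra.
Qed.

Lemma tail_bound_mono n t t' : Rabs t <= Rabs t' -> tail_bound n t <= tail_bound n t'.
Proof.
  intros H. unfold tail_bound. apply Rmult_le_compat_l.
  - apply Rmult_le_pos; [apply Rmult_le_pos; [lra | left; apply Rinv_0_lt_compat; lra]|].
    left; apply pow_lt; lra.
  - destruct (Req_dec (Rabs t) (Rabs t')) as [E|E]; [rewrite E; lra|].
    left. apply exp_increasing. nra.
Qed.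

Lemma picard_gap_0 t : picard_gap 0 t <= tail_bound 0 t / 2.
Proof.
  unfold picard_gap, tail_bound; simpl; unfold flow_integrand; simpl. rewrite !RInt_const.
  unfold scal; simpl; unfold mult; simpl.
  assert (Hc : forall i, Rabs (x0 i + (t - 0) * G i (fun j => x0 j) - x0 i) <= M * Rabs t).
  { intros i. replace (x0 i + (t - 0) * G i (fun j => x0 j) - x0 i) with (t * G i (fun j => x0 j)) by ring.
    rewrite Rabs_mult, Rmult_comm. apply Rmult_le_compat_r; [apply Rabs_pos | apply G_bounded]. }
  pose proof (Hc 0%nat). pose proof (Hc 1%nat). pose proof (Hc 2%nat).
  pose proof (exp_ineq1_le (6 * L * Rabs t)). pose proof (Rabs_pos t).
  assert (3 * M * Rabs t <= M / L * 1 * exp (6 * L * Rabs t) / 2).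
  { apply Rmult_le_reg_l with (r := 2 * L); [lra|].
    replace (2 * L * (M / L * 1 * exp (6 * L * Rabs t) / 2)) with (M * exp (6 * L * Rabs t)) by (field; lra).
    nra. }
  lra.
Qed.

Lemma picard_S_minus n i t :
  picard (S (S n)) i t - picard (S n) i t =
  RInt (fun s => flow_integrand (picard (S n)) i s - flow_integrand (picard n) i s) 0 t.
Proof.
  rewrite RInt_minus_continuous by (intros; apply flow_integrand_continuous, picard_time_lipschitz).
  simpl. ring.
Qed.

Lemma picard_S_minus_nonpos n i t : t <= 0 -> picard (S (S n)) i t - picard (S n) i t = 0.
Proof.
  intros Ht. rewrite picard_S_minus. apply Rabs_eq_0, Rle_antisym; [|apply Rabs_pos].
  apply Rle_trans with (0 * Rabs (t - 0)); [|lra]. apply abs_RInt_le_between.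
  - intros x. apply (@continuous_minus R_UniformSpace R_AbsRing R_NormedModule);
      apply flow_integrand_continuous, picard_time_lipschitz.
  - intros s Hs. rewrite Rmin_right, Rmax_left in Hs by lra. unfold flow_integrand.
    rewrite Rmax_left by lra. rewrite (G_depends_on_first_three i _ (fun j => picard n j 0)),
      Rminus_diag, Rabs_R0; try lra; rewrite !picard_at_0; auto.
Qed.

(* The weight [exp (6 L |t|)] makes each Picard step a contraction by a factor 1/2. *)
Lemma picard_gap_bound n t : picard_gap n t <= tail_bound n t / 2.
Proof.
  revert t. induction n as [|n IHn]; intros t; [apply picard_gap_0|].
  pose proof (tail_bound_nonneg (S n) t).
  unfold picard_gap. destruct (Rle_dec 0 t) as [Ht|Ht].
  2: { rewrite !picard_S_minus_nonpos, Rabs_R0 by lra. lra. }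
  rewrite !picard_S_minus.
  set (c := M / L * (/ 2) ^ n / 2).
  assert (Hc : 0 <= c) by (pose proof (tail_bound_nonneg n 0) as H0; unfold tail_bound in H0;
    rewrite Rabs_R0, Rmult_0_r, exp_0 in H0; unfold c; lra).
  assert (Hi : forall i, Rabs (RInt (fun s => flow_integrand (picard (S n)) i s - flow_integrand (picard n) i s) 0 t)
            <= (L * c) * exp (6 * L * t) / (6 * L)).
  { intros i. apply abs_RInt_le_exp; auto; try lra.
    - nra.
    - intros x. apply (@continuous_minus R_UniformSpace R_AbsRing R_NormedModule);
        apply flow_integrand_continuous, picard_time_lipschitz.
    - intros s Hs. unfold flow_integrand. eapply Rle_trans; [apply G_lipschitz|].
      rewrite Rmax_right by lra. specialize (IHn s).
      unfold picard_gap, l1_dist, tail_bound in *. rewrite (Rabs_right s) in IHn by lra.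
      replace (L * c * exp (6 * L * s)) with (L * (M / L * (/ 2) ^ n * exp (6 * L * s) / 2)) by (unfold c; field; lra).
      apply Rmult_le_compat_l; lra. }
  pose proof (Hi 0%nat). pose proof (Hi 1%nat). pose proof (Hi 2%nat).
  unfold tail_bound. rewrite (Rabs_right t) by lra.
  replace (M / L * (/ 2) ^ S n * exp (6 * L * t) / 2) with
    (3 * ((L * c) * exp (6 * L * t) / (6 * L))) by (unfold c; simpl; field; lra).
  lra.
Qed.

Lemma picard_increment_bound n k i t : (i < 3)%nat ->
  Rabs (picard (n + k) i t - picard n i t) <= tail_bound n t * (1 - (/2) ^ k).
Proof.
  intros Hi. induction k.
  - rewrite Nat.add_0_r, Rminus_diag, Rabs_R0. simpl. lra.
  - replace (picard (n + S k) i t - picard n i t) with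
      ((picard (S (n + k)) i t - picard (n + k) i t) + (picard (n + k) i t - picard n i t))
      by (rewrite Nat.add_succ_r; ring).
    eapply Rle_trans; [apply Rabs_triang|].
    assert (Rabs (picard (S (n + k)) i t - picard (n + k) i t) <= picard_gap (n + k) t).
    { unfold picard_gap.
      pose proof (Rabs_pos (picard (S (n + k)) 0%nat t - picard (n + k) 0%nat t)).
      pose proof (Rabs_pos (picard (S (n + k)) 1%nat t - picard (n + k) 1%nat t)).
      pose proof (Rabs_pos (picard (S (n + k)) 2%nat t - picard (n + k) 2%nat t)).
      destruct i as [|[|[|i]]]; try lra. lia. }
    pose proof (picard_gap_bound (n + k) t).
    assert (tail_bound (n + k) t = tail_bound n t * (/2) ^ k) by (unfold tail_bound; rewrite pow_add; ring).
    replace (tail_bound n t * (1 - (/2) ^ S k)) with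
      (tail_bound n t * (1 - (/2) ^ k) + tail_bound n t * (/2) ^ k / 2) by (simpl; field).
    lra.
Qed.

Definition picard_limit (i : nat) (t : R) : R := real (Lim_seq (fun n => picard n i t)).

Lemma picard_limit_correct i t : (i < 3)%nat -> is_lim_seq (fun n => picard n i t) (picard_limit i t).
Proof.
  intros Hi.
  assert (Hcauchy : forall a b, (a <= b)%nat -> Rabs (picard b i t - picard a i t) <= tail_bound a t).
  { intros a b Hab. replace b with (a + (b - a))%nat by lia.
    eapply Rle_trans; [apply picard_increment_bound; auto|].
    pose proof (tail_bound_nonneg a t). pose proof (pow_lt (/2) (b - a) ltac:(lra)). nra. }
  assert (He : ex_finite_lim_seq (fun n => picard n i t)).
  { apply ex_lim_seq_cauchy_corr. intros eps.
    pose proof (tail_bound_nonneg 0 t) as H0.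
    destruct (pow_lt_1_zero (/2) ltac:(rewrite Rabs_right; lra) (eps / (tail_bound 0 t + 1))) as [N HN].
    { apply Rdiv_lt_0_compat; [apply cond_pos | lra]. }
    exists N. intros n m Hn Hm.
    assert (Hsmall : forall a, (N <= a)%nat -> tail_bound a t < eps).
    { intros a Ha. specialize (HN a Ha). rewrite Rabs_right in HN by (left; apply pow_lt; lra).
      assert (tail_bound a t = tail_bound 0 t * (/2) ^ a) by (unfold tail_bound; simpl; ring).
      apply Rmult_lt_compat_r with (r := tail_bound 0 t + 1) in HN; [|lra].
      unfold Rdiv in HN. rewrite Rmult_assoc, Rinv_l in HN by lra.
      pose proof (pow_lt (/2) a ltac:(lra)). nra. }
    destruct (Nat.le_ge_cases n m).
    - rewrite Rabs_minus_sym. eapply Rle_lt_trans; [apply Hcauchy|apply Hsmall]; auto.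
    - eapply Rle_lt_trans; [apply Hcauchy|apply Hsmall]; auto. }
  destruct He as [l Hl]. unfold picard_limit. rewrite (is_lim_seq_unique _ _ Hl). exact Hl.
Qed.

Lemma picard_limit_tail n i t : (i < 3)%nat -> Rabs (picard_limit i t - picard n i t) <= tail_bound n t.
Proof.
  intros Hi. apply Rle_plus_epsilon. intros eps Heps.
  pose proof (picard_limit_correct i t Hi) as H. apply is_lim_seq_spec in H.
  destruct (H (mkposreal eps Heps)) as [N HN]. simpl in HN.
  specialize (HN (n + N)%nat ltac:(lia)).
  pose proof (picard_increment_bound n N i t Hi).
  pose proof (pow_lt (/2) N ltac:(lra)). pose proof (tail_bound_nonneg n t).
  replace (picard_limit i t - picard n i t) with
    (- (picard (n + N) i t - picard_limit i t) + (picard (n + N) i t - picard n i t)) by ring.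
  eapply Rle_trans; [apply Rabs_triang|]. rewrite Rabs_Ropp. nra.
Qed.

Lemma picard_limit_at_0 i : (i < 3)%nat -> picard_limit i 0 = x0 i.
Proof.
  intros Hi. apply Rminus_diag_uniq, Rabs_eq_0, Rle_antisym; [|apply Rabs_pos].
  apply (le_of_le_geometric _ _ (tail_bound 0 0)); [apply tail_bound_nonneg|].
  intros n. pose proof (picard_limit_tail n i 0 Hi). rewrite picard_at_0 in H.
  replace (tail_bound n 0) with (tail_bound 0 0 * (/2) ^ n) in H by (unfold tail_bound; simpl; ring).
  lra.
Qed.

Lemma picard_limit_time_lipschitz : time_lipschitz picard_limit.
Proof.
  intros i t s Hi. apply (le_of_le_geometric _ _ (tail_bound 0 t + tail_bound 0 s)).
  { pose proof (tail_bound_nonneg 0 t). pose proof (tail_bound_nonneg 0 s). lra. }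
  intros n. pose proof (picard_limit_tail n i t Hi). pose proof (picard_limit_tail n i s Hi).
  pose proof (picard_time_lipschitz n i t s Hi).
  assert (Ht : tail_bound n t = tail_bound 0 t * (/2) ^ n) by (unfold tail_bound; simpl; ring).
  assert (Hs : tail_bound n s = tail_bound 0 s * (/2) ^ n) by (unfold tail_bound; simpl; ring).
  replace (picard_limit i t - picard_limit i s) with
    ((picard_limit i t - picard n i t) + (picard n i t - picard n i s) - (picard_limit i s - picard n i s)) by ring.
  eapply Rle_trans; [apply Rabs_triang3|]. rewrite Rmult_plus_distr_r. lra.
Qed.

Lemma picard_limit_integral i t : (i < 3)%nat ->
  picard_limit i t = x0 i + RInt (flow_integrand picard_limit i) 0 t.
Proof.
  intros Hi. apply Rminus_diag_uniq, Rabs_eq_0, Rle_antisym; [|apply Rabs_pos].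
  set (C := tail_bound 0 t).
  assert (HC : 0 <= C) by apply tail_bound_nonneg.
  apply (le_of_le_geometric _ _ (C + 3 * L * C * Rabs t)).
  { pose proof (Rabs_pos t). assert (0 <= L * C * Rabs t) by (apply Rmult_le_pos; nra). lra. }
  intros n.
  assert (Htail : forall k t', tail_bound k t' = tail_bound 0 t' * (/2) ^ k) by (intros; unfold tail_bound; simpl; ring).
  pose proof (picard_limit_tail (S n) i t Hi) as Hn. simpl picard in Hn.
  assert (Hint : Rabs (RInt (fun s => flow_integrand (picard n) i s - flow_integrand picard_limit i s) 0 t)
       <= (3 * L * (C * (/2) ^ n)) * Rabs t).
  { rewrite <- (Rminus_0_r t) at 2. apply abs_RInt_le_between.
    - intros x. apply (@continuous_minus R_UniformSpace R_AbsRing R_NormedModule);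
        apply flow_integrand_continuous; [apply picard_time_lipschitz | apply picard_limit_time_lipschitz].
    - intros s Hs. unfold flow_integrand. eapply Rle_trans; [apply G_lipschitz|]. unfold l1_dist.
      assert (Hr : Rabs (Rmax 0 s) <= Rabs t).
      { unfold Rmin, Rmax in *. destruct (Rle_dec 0 t), (Rle_dec 0 s); unfold Rabs;
          repeat destruct Rcase_abs; lra. }
      assert (Hj : forall j, (j < 3)%nat -> Rabs (picard n j (Rmax 0 s) - picard_limit j (Rmax 0 s)) <= C * (/2) ^ n).
      { intros j Hj. rewrite Rabs_minus_sym. eapply Rle_trans; [apply picard_limit_tail; auto|].
        rewrite Htail. unfold C. rewrite (Htail 0%nat). pose proof (tail_bound_mono 0 _ _ Hr).
        pose proof (pow_lt (/2) n ltac:(lra)). simpl in *. nra. }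
      pose proof (Hj 0%nat ltac:(lia)). pose proof (Hj 1%nat ltac:(lia)). pose proof (Hj 2%nat ltac:(lia)).
      replace (3 * L * (C * (/ 2) ^ n)) with (L * (C * (/ 2) ^ n + C * (/ 2) ^ n + C * (/ 2) ^ n)) by ring.
      apply Rmult_le_compat_l; lra. }
  rewrite RInt_minus_continuous in Hint by (intros; apply flow_integrand_continuous;
    first [apply picard_time_lipschitz | apply picard_limit_time_lipschitz]).
  rewrite Htail in Hn. fold C in Hn. simpl in Hn.
  replace (picard_limit i t - (x0 i + RInt (flow_integrand picard_limit i) 0 t)) with
    ((picard_limit i t - (x0 i + RInt (flow_integrand (picard n) i) 0 t)) +
     (RInt (flow_integrand (picard n) i) 0 t - RInt (flow_integrand picard_limit i) 0 t)) by ring.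
  eapply Rle_trans; [apply Rabs_triang|].
  pose proof (pow_lt (/2) n ltac:(lra)). pose proof (Rabs_pos t).
  assert (C * (/ 2 * (/ 2) ^ n) <= C * (/2)^n) by nra.
  replace ((C + 3 * L * C * Rabs t) * (/ 2) ^ n) with (C * (/2)^n + 3 * L * (C * (/ 2) ^ n) * Rabs t) by ring.
  lra.
Qed.

Lemma picard_limit_solves i t : (i < 3)%nat -> 0 <= t ->
  is_derive (picard_limit i) t (G i (fun j => picard_limit j t)).
Proof.
  intros Hi Ht.
  apply (is_derive_ext (fun t => x0 i + RInt (flow_integrand picard_limit i) 0 t)).
  { intros; symmetry; apply picard_limit_integral; auto. }
  assert (Hc : forall x, continuous (flow_integrand picard_limit i) x)
    by (intros; apply flow_integrand_continuous, picard_limit_time_lipschitz).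
  assert (Hd : is_derive (fun t => RInt (flow_integrand picard_limit i) 0 t) t (flow_integrand picard_limit i t)).
  { apply (is_derive_RInt _ _ 0); auto.
    apply filter_forall. intros b. apply (@RInt_correct R_CompleteNormedModule), ex_RInt_of_continuous; auto. }
  pose proof (is_derive_plus (K := R_AbsRing) (V := R_NormedModule) (fun _ => x0 i) _ t zero _
    (is_derive_const _ _) Hd) as H.
  unfold flow_integrand in H. rewrite Rmax_right in H by lra.
  unfold plus, zero in H; simpl in H. rewrite Rplus_0_l in H. exact H.
Qed.

End Picard.

Theorem picard_lindelof (G : nat -> (nat -> R) -> R) L M (x0 : nat -> R) :
  0 < L -> 0 <= M -> (forall i x y, Rabs (G i x - G i y) <= L * l1_dist x y) ->
  (forall i x, Rabs (G i x) <= M) ->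
  exists X : nat -> R -> R, (forall i, (i < 3)%nat -> X i 0 = x0 i) /\
    forall i t, (i < 3)%nat -> 0 <= t -> is_derive (X i) t (G i (fun j => X j t)).
Proof.
  intros HL HM HG HB. exists (picard_limit G x0). split.
  - intros; apply (picard_limit_at_0 G L M); auto.
  - intros; apply (picard_limit_solves G L M); auto.
Qed.

(** * Global solutions of the clamped system *)

Definition in_box (B a b c : R) : Prop := Rabs a <= B /\ Rabs b <= B /\ Rabs c <= B.

Definition lipschitz_on_box (B : R) (f : R -> R -> R -> R) : Prop :=
  exists K Mf, 0 <= K /\ 0 <= Mf /\
    (forall a b c a' b' c', in_box B a b c -> in_box B a' b' c' ->
       Rabs (f a b c - f a' b' c') <= K * (Rabs (a - a') + Rabs (b - b') + Rabs (c - c'))) /\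
    (forall a b c, in_box B a b c -> Rabs (f a b c) <= Mf).

Lemma lipschitz_on_box_of_lipschitz B K (f : R -> R -> R -> R) : 0 <= B -> 0 <= K ->
  (forall a b c a' b' c', Rabs (f a b c - f a' b' c') <= K * (Rabs (a - a') + Rabs (b - b') + Rabs (c - c'))) ->
  lipschitz_on_box B f.
Proof.
  intros HB HK Hf. exists K, (Rabs (f 0 0 0) + K * (3 * B)).
  repeat split; auto.
  - pose proof (Rabs_pos (f 0 0 0)). nra.
  - intros a b c [Ha [Hb Hc]]. specialize (Hf a b c 0 0 0). rewrite !Rminus_0_r in Hf.
    pose proof (Rabs_triang_inv (f a b c) (f 0 0 0)).
    assert (K * (Rabs a + Rabs b + Rabs c) <= K * (3 * B)) by (apply Rmult_le_compat_l; lra).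
    lra.
Qed.

Lemma lipschitz_on_box_plus B f g : lipschitz_on_box B f -> lipschitz_on_box B g ->
  lipschitz_on_box B (fun a b c => f a b c + g a b c).
Proof.
  intros [Kf [Mf [HKf [HMf [Lf Bf]]]]] [Kg [Mg [HKg [HMg [Lg Bg]]]]].
  exists (Kf + Kg), (Mf + Mg). repeat split; try lra.
  - intros a b c a' b' c' H H'. specialize (Lf _ _ _ _ _ _ H H'). specialize (Lg _ _ _ _ _ _ H H').
    replace (f a b c + g a b c - (f a' b' c' + g a' b' c')) with
      ((f a b c - f a' b' c') + (g a b c - g a' b' c')) by ring.
    eapply Rle_trans; [apply Rabs_triang|]. lra.
  - intros a b c H. specialize (Bf _ _ _ H). specialize (Bg _ _ _ H).
    eapply Rle_trans; [apply Rabs_triang|]. lra.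
Qed.

Lemma lipschitz_on_box_opp B f : lipschitz_on_box B f -> lipschitz_on_box B (fun a b c => - f a b c).
Proof.
  intros [K [Mf [HK [HM [Lf Bf]]]]]. exists K, Mf. repeat split; auto.
  - intros. replace (- f a b c - - f a' b' c') with (- (f a b c - f a' b' c')) by ring.
    rewrite Rabs_Ropp. auto.
  - intros. rewrite Rabs_Ropp. auto.
Qed.

Lemma lipschitz_on_box_mult B f g : lipschitz_on_box B f -> lipschitz_on_box B g ->
  lipschitz_on_box B (fun a b c => f a b c * g a b c).
Proof.
  intros [Kf [Mf [HKf [HMf [Lf Bf]]]]] [Kg [Mg [HKg [HMg [Lg Bg]]]]].
  exists (Mf * Kg + Mg * Kf), (Mf * Mg). repeat split.
  - nra.
  - nra.
  - intros a b c a' b' c' H H'. specialize (Lf _ _ _ _ _ _ H H'). specialize (Lg _ _ _ _ _ _ H H').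
    pose proof (Bf _ _ _ H). pose proof (Bg _ _ _ H').
    replace (f a b c * g a b c - f a' b' c' * g a' b' c') with
      (f a b c * (g a b c - g a' b' c') + g a' b' c' * (f a b c - f a' b' c')) by ring.
    eapply Rle_trans; [apply Rabs_triang|]. rewrite !Rabs_mult.
    set (d := Rabs (a - a') + Rabs (b - b') + Rabs (c - c')).
    pose proof (Rabs_pos (g a b c - g a' b' c')). pose proof (Rabs_pos (f a b c - f a' b' c')).
    pose proof (Rabs_pos (f a b c)). pose proof (Rabs_pos (g a' b' c')).
    assert (Rabs (f a b c) * Rabs (g a b c - g a' b' c') <= Mf * (Kg * d)) by (apply Rmult_le_compat; auto).
    assert (Rabs (g a' b' c') * Rabs (f a b c - f a' b' c') <= Mg * (Kf * d)) by (apply Rmult_le_compat; auto).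
    lra.
  - intros a b c H. rewrite Rabs_mult. apply Rmult_le_compat; auto using Rabs_pos.
Qed.

Lemma lipschitz_on_box_const B k : 0 <= B -> lipschitz_on_box B (fun _ _ _ => k).
Proof.
  intros HB. apply (lipschitz_on_box_of_lipschitz B 0); auto; try lra.
  intros. rewrite Rminus_diag, Rabs_R0. pose proof (Rabs_pos (a - a')).
  pose proof (Rabs_pos (b - b')). pose proof (Rabs_pos (c - c')). lra.
Qed.

Lemma posp_lipschitz a b : Rabs (posp a - posp b) <= Rabs (a - b).
Proof. unfold posp, Rmax. repeat destruct Rle_dec; unfold Rabs; repeat destruct Rcase_abs; lra. Qed.

Lemma Tr_lipschitz P a b : Rabs (Tr P a - Tr P b) <= Rabs (pr P) * Rabs (a - b).
Proof.
  unfold Tr. rewrite <- Rabs_mult.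
  destruct (Rlt_dec a (pCI P)), (Rlt_dec b (pCI P));
    replace (pr P * (a - b)) with (pr P * a - pr P * b) by ring;
    unfold Rabs; repeat destruct Rcase_abs; nra.
Qed.

Lemma field_lipschitz_on_box P B : 0 <= B ->
  lipschitz_on_box B (fS P) /\ lipschitz_on_box B (fIm P) /\ lipschitz_on_box B (fIs P).
Proof.
  intros HB.
  assert (Hc : forall k, lipschitz_on_box B (fun _ _ _ => k)) by (intros; apply lipschitz_on_box_const; auto).
  assert (Hlin : forall (h : R -> R -> R -> R) (K : R), 0 <= K ->
    (forall a b c a' b' c', Rabs (h a b c - h a' b' c') <= K * (Rabs (a - a') + Rabs (b - b') + Rabs (c - c'))) ->
    lipschitz_on_box B h) by (intros; eapply lipschitz_on_box_of_lipschitz; eauto).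
  assert (H1 : lipschitz_on_box B (fun a _ _ => a))
    by (apply (Hlin _ 1); [lra|]; intros; pose proof (Rabs_pos (b - b')); pose proof (Rabs_pos (c - c')); lra).
  assert (H2 : lipschitz_on_box B (fun _ b _ => b))
    by (apply (Hlin _ 1); [lra|]; intros; pose proof (Rabs_pos (a - a')); pose proof (Rabs_pos (c - c')); lra).
  assert (H3 : lipschitz_on_box B (fun _ _ c => c))
    by (apply (Hlin _ 1); [lra|]; intros; pose proof (Rabs_pos (a - a')); pose proof (Rabs_pos (b - b')); lra).
  assert (Hp : lipschitz_on_box B (fun _ _ c => posp (c - pCI P))).
  { apply (Hlin _ 1); [lra|]. intros. pose proof (Rabs_pos (a - a')). pose proof (Rabs_pos (b - b')).
    pose proof (posp_lipschitz (c - pCI P) (c' - pCI P)).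
    replace (c - pCI P - (c' - pCI P)) with (c - c') in * by ring. lra. }
  assert (HT : lipschitz_on_box B (fun _ _ c => Tr P c)).
  { apply (Hlin _ (Rabs (pr P))); [apply Rabs_pos|]. intros.
    pose proof (Rabs_pos (a - a')). pose proof (Rabs_pos (b - b')). pose proof (Rabs_pos (pr P)).
    pose proof (Tr_lipschitz P c c'). nra. }
  assert (Hm : forall f g, lipschitz_on_box B f -> lipschitz_on_box B g ->
    lipschitz_on_box B (fun a b c => f a b c - g a b c))
    by (intros; apply lipschitz_on_box_plus; auto; apply lipschitz_on_box_opp; auto).
  unfold fS, fIm, fIs.
  repeat split; repeat first [ apply Hc | apply H1 | apply H2 | apply H3 | apply Hp | apply HT
                             | apply Hm | apply lipschitz_on_box_plus | apply lipschitz_on_box_mult ].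
Qed.

Definition clamp (e rb v : R) : R := Rmax (e - rb) (Rmin (e + rb) v).

Lemma clamp_dist e rb v : 0 <= rb -> Rabs (clamp e rb v - e) <= rb.
Proof. intros. unfold clamp, Rmax, Rmin. repeat destruct Rle_dec; unfold Rabs; destruct Rcase_abs; lra. Qed.

Lemma clamp_id e rb v : Rabs (v - e) <= rb -> clamp e rb v = v.
Proof. intros H. unfold clamp, Rmax, Rmin. revert H. unfold Rabs. repeat destruct Rle_dec; destruct Rcase_abs; lra. Qed.

Lemma clamp_lipschitz e rb v w : 0 <= rb -> Rabs (clamp e rb v - clamp e rb w) <= Rabs (v - w).
Proof. intros. unfold clamp, Rmax, Rmin. repeat destruct Rle_dec; unfold Rabs; repeat destruct Rcase_abs; lra. Qed.

Definition clamped_field (P : Params) (Se Ime Ise rb : R) (i : nat) (x : nat -> R) : R :=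
  match i with
  | O => fS P (clamp Se rb (x 0%nat)) (clamp Ime rb (x 1%nat)) (clamp Ise rb (x 2%nat))
  | S O => fIm P (clamp Se rb (x 0%nat)) (clamp Ime rb (x 1%nat)) (clamp Ise rb (x 2%nat))
  | _ => fIs P (clamp Se rb (x 0%nat)) (clamp Ime rb (x 1%nat)) (clamp Ise rb (x 2%nat))
  end.

Lemma clamped_field_lipschitz P Se Ime Ise rb : 0 <= rb ->
  exists K M, 0 < K /\ 0 <= M /\
    (forall i x y, Rabs (clamped_field P Se Ime Ise rb i x - clamped_field P Se Ime Ise rb i y) <= K * l1_dist x y) /\
    (forall i x, Rabs (clamped_field P Se Ime Ise rb i x) <= M).
Proof.
  intros Hrb.
  set (B := Rabs Se + Rabs Ime + Rabs Ise + rb).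
  assert (HB : 0 <= B) by (unfold B; pose proof (Rabs_pos Se); pose proof (Rabs_pos Ime); pose proof (Rabs_pos Ise); lra).
  assert (Hbox : forall x, in_box B (clamp Se rb (x 0%nat)) (clamp Ime rb (x 1%nat)) (clamp Ise rb (x 2%nat))).
  { intros x. pose proof (clamp_dist Se rb (x 0%nat) Hrb). pose proof (clamp_dist Ime rb (x 1%nat) Hrb).
    pose proof (clamp_dist Ise rb (x 2%nat) Hrb). unfold in_box, B.
    pose proof (Rabs_pos Se); pose proof (Rabs_pos Ime); pose proof (Rabs_pos Ise).
    pose proof (Rabs_triang_inv (clamp Se rb (x 0%nat)) Se).
    pose proof (Rabs_triang_inv (clamp Ime rb (x 1%nat)) Ime).
    pose proof (Rabs_triang_inv (clamp Ise rb (x 2%nat)) Ise). repeat split; lra. }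
  assert (Hlip : forall (f : R -> R -> R -> R) K, 0 <= K ->
    (forall a b c a' b' c', in_box B a b c -> in_box B a' b' c' ->
       Rabs (f a b c - f a' b' c') <= K * (Rabs (a - a') + Rabs (b - b') + Rabs (c - c'))) ->
    forall x y, Rabs (f (clamp Se rb (x 0%nat)) (clamp Ime rb (x 1%nat)) (clamp Ise rb (x 2%nat))
                    - f (clamp Se rb (y 0%nat)) (clamp Ime rb (y 1%nat)) (clamp Ise rb (y 2%nat)))
                <= K * l1_dist x y).
  { intros f K HK Hf x y. eapply Rle_trans; [apply Hf; apply Hbox|]. unfold l1_dist.
    pose proof (clamp_lipschitz Se rb (x 0%nat) (y 0%nat) Hrb).
    pose proof (clamp_lipschitz Ime rb (x 1%nat) (y 1%nat) Hrb).
    pose proof (clamp_lipschitz Ise rb (x 2%nat) (y 2%nat) Hrb).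
    apply Rmult_le_compat_l; lra. }
  assert (Hl1 : forall x y, 0 <= l1_dist x y)
    by (intros; unfold l1_dist; pose proof (Rabs_pos (x 0%nat - y 0%nat));
        pose proof (Rabs_pos (x 1%nat - y 1%nat)); pose proof (Rabs_pos (x 2%nat - y 2%nat)); lra).
  destruct (field_lipschitz_on_box P B HB) as
    [[K0 [M0 [HK0 [HM0 [L0 B0]]]]] [[K1 [M1 [HK1 [HM1 [L1 B1]]]]] [K2 [M2 [HK2 [HM2 [L2 B2]]]]]]].
  exists (K0 + K1 + K2 + 1), (M0 + M1 + M2). repeat split; try lra.
  - intros [|[|i]] x y; simpl;
      [pose proof (Hlip _ K0 HK0 L0 x y) | pose proof (Hlip _ K1 HK1 L1 x y) | pose proof (Hlip _ K2 HK2 L2 x y)];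
      pose proof (Hl1 x y); nra.
  - intros [|[|i]] x; simpl;
      [pose proof (B0 _ _ _ (Hbox x)) | pose proof (B1 _ _ _ (Hbox x)) | pose proof (B2 _ _ _ (Hbox x))]; lra.
Qed.

Lemma clamped_solution_exists P Se Ime Ise rb S0 Im0 Is0 : 0 <= rb ->
  exists S Im Is : R -> R, S 0 = S0 /\ Im 0 = Im0 /\ Is 0 = Is0 /\
    forall t, 0 <= t ->
      is_derive S t (fS P (clamp Se rb (S t)) (clamp Ime rb (Im t)) (clamp Ise rb (Is t))) /\
      is_derive Im t (fIm P (clamp Se rb (S t)) (clamp Ime rb (Im t)) (clamp Ise rb (Is t))) /\
      is_derive Is t (fIs P (clamp Se rb (S t)) (clamp Ime rb (Im t)) (clamp Ise rb (Is t))).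
Proof.
  intros Hrb. destruct (clamped_field_lipschitz P Se Ime Ise rb Hrb) as [K [M [HK [HM [Hlip Hbnd]]]]].
  destruct (picard_lindelof (clamped_field P Se Ime Ise rb) K M
              (fun i => match i with O => S0 | S O => Im0 | _ => Is0 end) HK HM Hlip Hbnd) as [X [HX0 HXd]].
  exists (X 0%nat), (X 1%nat), (X 2%nat).
  split; [apply HX0; lia|]. split; [apply HX0; lia|]. split; [apply HX0; lia|].
  intros t Ht. split; [|split]; [exact (HXd 0%nat t ltac:(lia) Ht) | exact (HXd 1%nat t ltac:(lia) Ht)
                                 | exact (HXd 2%nat t ltac:(lia) Ht)].
Qed.

(** * Comparison lemmas for Lyapunov functions *)

Lemma is_derive_continuity_pt (W : R -> R) x l : is_derive W x l -> continuity_pt W x.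
Proof.
  intros H. apply continuity_pt_filterlim. apply (ex_derive_continuous (V := R_NormedModule)). exists l; auto.
Qed.

Lemma is_derive_near (W : R -> R) x l : is_derive W x l ->
  forall eps, 0 < eps -> exists d, 0 < d /\ forall r, Rabs (r - x) < d -> Rabs (W r - W x) < eps.
Proof.
  intros H eps He. pose proof (is_derive_continuity_pt W x l H) as Hc.
  unfold continuity_pt, continue_in, limit1_in, limit_in in Hc; simpl in Hc.
  destruct (Hc eps He) as [d [Hd Hr]]. exists d. split; auto. intros r Hrr.
  destruct (Req_dec r x) as [->|Hne]; [rewrite Rminus_diag, Rabs_R0; lra|].
  apply Hr. repeat split; auto.
Qed.

Lemma increment_le_of_derive_le (W dW : R -> R) a b k : a <= b ->
  (forall x, a <= x <= b -> is_derive W x (dW x)) -> (forall x, a <= x <= b -> dW x <= k) ->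
  W b - W a <= k * (b - a).
Proof.
  intros Hab Hd Hk. destruct (MVT_gen W a b dW) as [c [Hc Heq]].
  - intros x Hx. rewrite Rmin_left, Rmax_right in Hx by lra. apply Hd; lra.
  - intros x Hx. rewrite Rmin_left, Rmax_right in Hx by lra. apply (is_derive_continuity_pt _ _ (dW x)), Hd; lra.
  - rewrite Rmin_left, Rmax_right in Hc by lra. rewrite Heq. apply Rmult_le_compat_r; [lra|]. apply Hk; lra.
Qed.

Lemma increment_ge_of_derive_ge (W dW : R -> R) a b k : a <= b ->
  (forall x, a <= x <= b -> is_derive W x (dW x)) -> (forall x, a <= x <= b -> k <= dW x) ->
  k * (b - a) <= W b - W a.
Proof.
  intros Hab Hd Hk.
  assert (- W b - - W a <= - k * (b - a)); [|lra].
  apply (increment_le_of_derive_le (fun t => - W t) (fun t => - dW t)); auto.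
  - intros x Hx. apply (is_derive_opp (K := R_AbsRing) (V := R_NormedModule)), Hd; auto.
  - intros x Hx. specialize (Hk x Hx). lra.
Qed.

(* [W] cannot rise while it stays below [m]; a continuity argument at the first exit time shows it never
   reaches [m]. *)
Lemma nonincreasing_below_level (W dW : R -> R) m :
  (forall t, 0 <= t -> is_derive W t (dW t)) -> W 0 < m ->
  (forall t, 0 <= t -> W t < m -> dW t <= 0) -> forall t, 0 <= t -> W t <= W 0.
Proof.
  intros Hd H0 Hn t1 Ht1.
  set (E := fun s => 0 <= s <= t1 /\ forall r, 0 <= r <= s -> W r < m).
  assert (HEb : bound E) by (exists t1; intros s [Hs _]; lra).
  assert (HE0 : E 0) by (split; [lra | intros r Hr; replace r with 0 by lra; auto]).
  destruct (completeness E HEb (ex_intro _ 0 HE0)) as [s [Hub Hlub]].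
  assert (Hs0 : 0 <= s) by (apply Hub; auto).
  assert (Hs1 : s <= t1) by (apply Hlub; intros x [Hx _]; lra).
  assert (Hbelow : forall r, 0 <= r < s -> W r < m).
  { intros r Hr. destruct (classic (exists s', E s' /\ r < s')) as [[s' [[_ Hs'] Hrs]]|Hno].
    - apply Hs'; lra.
    - exfalso. assert (s <= r); [|lra]. apply Hlub. intros x Hx.
      destruct (Rle_dec x r); auto. exfalso; apply Hno. exists x; split; auto; lra. }
  assert (Hle : forall r, 0 <= r < s -> W r <= W 0).
  { intros r Hr. assert (W r - W 0 <= 0 * (r - 0)); [|lra].
    apply (increment_le_of_derive_le W dW); [lra | intros; apply Hd; lra|].
    intros x Hx. apply Hn; [lra | apply Hbelow; lra]. }
  assert (Hs : W s <= W 0).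
  { destruct (Rle_dec (W s) (W 0)) as [|Hgt]; auto. exfalso.
    destruct (Req_dec s 0); [subst; lra|].
    destruct (is_derive_near W s (dW s) (Hd s Hs0) (W s - W 0) ltac:(lra)) as [d [Hd0 Hdd]].
    set (r := Rmax 0 (s - d / 2)).
    assert (Hr : 0 <= r < s) by (unfold r, Rmax; destruct Rle_dec; lra).
    assert (Hrs : Rabs (r - s) < d) by (unfold r, Rmax; destruct Rle_dec; unfold Rabs; destruct Rcase_abs; lra).
    specialize (Hdd r Hrs). specialize (Hle r Hr). revert Hdd. unfold Rabs; destruct Rcase_abs; lra. }
  assert (Hst : s = t1).
  { destruct (Req_dec s t1); auto. exfalso.
    destruct (is_derive_near W s (dW s) (Hd s Hs0) (m - W s) ltac:(lra)) as [d [Hd0 Hdd]].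
    set (s' := Rmin t1 (s + d / 2)).
    assert (E s').
    { split; [unfold s', Rmin; destruct Rle_dec; lra|].
      intros r Hr. destruct (Rlt_dec r s); [apply Hbelow; lra|].
      assert (Hrs : Rabs (r - s) < d)
        by (unfold s', Rmin in Hr; destruct Rle_dec in Hr; unfold Rabs; destruct Rcase_abs; lra).
      specialize (Hdd r Hrs). revert Hdd; unfold Rabs; destruct Rcase_abs; lra. }
    apply Hub in H1. unfold s', Rmin in H1; destruct Rle_dec in H1; lra. }
  subst. auto.
Qed.

Lemma lyapunov_decay (W dW p : R -> R) l1 l2 c m :
  0 < l1 -> 0 < l2 -> 0 < c -> 0 < m ->
  (forall t, 0 <= t -> is_derive W t (dW t)) ->
  (forall t, 0 <= t -> l1 * p t <= W t /\ W t <= l2 * p t) -> (forall t, 0 <= t -> 0 <= p t) ->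
  (forall t, 0 <= t -> p t < m -> dW t <= - c * p t) ->
  W 0 < l1 * m ->
  (forall t, 0 <= t -> W t <= W 0) /\ (forall eta, 0 < eta -> exists T, forall t, T <= t -> W t < eta).
Proof.
  intros Hl1 Hl2 Hc Hm Hd Hb Hp Hdw H0.
  assert (Hneg : forall t, 0 <= t -> W t < l1 * m -> dW t <= - c * p t).
  { intros t Ht HW. apply Hdw; auto. apply Rmult_lt_reg_l with l1; auto. specialize (Hb t Ht). lra. }
  assert (Hmax : forall t, 0 <= t -> W t <= W 0).
  { apply (nonincreasing_below_level W dW (l1 * m)); auto.
    intros t Ht HW. specialize (Hneg t Ht HW). specialize (Hp t Ht). nra. }
  split; auto.
  assert (Hall : forall t, 0 <= t -> dW t <= - c * p t) by (intros; apply Hneg; auto; specialize (Hmax t H); lra).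
  assert (Hmono : forall a b, 0 <= a <= b -> W b <= W a).
  { intros a b Hab. assert (W b - W a <= 0 * (b - a)); [|lra].
    apply (increment_le_of_derive_le W dW); [lra | intros; apply Hd; lra|].
    intros x Hx. specialize (Hall x ltac:(lra)). specialize (Hp x ltac:(lra)). nra. }
  intros eta Heta.
  assert (HW0 : 0 <= W 0) by (specialize (Hb 0 ltac:(lra)); specialize (Hp 0 ltac:(lra)); nra).
  set (T := W 0 * l2 / (c * eta) + 1).
  assert (HT : 0 < T) by (unfold T; assert (0 <= W 0 * l2 / (c * eta))
    by (apply Rmult_le_pos; [nra | left; apply Rinv_0_lt_compat; nra]); lra).
  destruct (classic (exists t0, 0 <= t0 <= T /\ W t0 < eta)) as [[t0 [Ht0 Hw0]]|Hno].
  - exists T. intros t Ht. specialize (Hmono t0 t ltac:(lra)). lra.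
  - exfalso.
    assert (Hge : forall t, 0 <= t <= T -> eta <= W t).
    { intros t Ht. destruct (Rle_dec eta (W t)); auto. exfalso; apply Hno; exists t; split; auto; lra. }
    assert (W T - W 0 <= (- c * eta / l2) * (T - 0)).
    { apply (increment_le_of_derive_le W dW); [lra | intros; apply Hd; lra|].
      intros x Hx. specialize (Hall x ltac:(lra)). specialize (Hge x Hx). specialize (Hb x ltac:(lra)).
      assert (eta / l2 <= p x) by (apply Rmult_le_reg_l with l2; auto; unfold Rdiv; field_simplify; lra).
      unfold Rdiv in *. nra. }
    specialize (Hb T ltac:(lra)). specialize (Hp T ltac:(lra)).
    assert (- c * eta / l2 * (T - 0) = - (W 0) - c * eta / l2) by (unfold T; field; split; lra).
    assert (0 < c * eta / l2) by (apply Rdiv_lt_0_compat; nra).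
    nra.
Qed.

(* Chetaev's argument: [W] grows at least linearly, contradicting the bound on [p]. *)
Lemma chetaev_absurd (W dW p : R -> R) l2 c B :
  0 < l2 -> 0 < c ->
  (forall t, 0 <= t -> is_derive W t (dW t)) ->
  (forall t, 0 <= t -> W t <= l2 * p t) -> (forall t, 0 <= t -> 0 <= p t) ->
  (forall t, 0 <= t -> c * p t <= dW t) -> (forall t, 0 <= t -> p t <= B) ->
  0 < W 0 -> False.
Proof.
  intros Hl2 Hc Hd Hhi Hp Hdw HB H0.
  assert (Hinc : forall t, 0 <= t -> W 0 <= W t).
  { intros t Ht. assert (0 * (t - 0) <= W t - W 0); [|lra].
    apply (increment_ge_of_derive_ge W dW); [lra | intros; apply Hd; lra|].
    intros x Hx. specialize (Hdw x ltac:(lra)). specialize (Hp x ltac:(lra)). nra. }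
  set (k := c * W 0 / l2).
  assert (Hk : 0 < k) by (unfold k; apply Rdiv_lt_0_compat; nra).
  assert (Hg : forall t, 0 <= t -> k * (t - 0) <= W t - W 0).
  { intros t Ht. apply (increment_ge_of_derive_ge W dW); [lra | intros; apply Hd; lra|].
    intros x Hx. specialize (Hdw x ltac:(lra)). specialize (Hinc x ltac:(lra)). specialize (Hhi x ltac:(lra)).
    assert (W 0 / l2 <= p x) by (apply Rmult_le_reg_l with l2; auto; unfold Rdiv; field_simplify; lra).
    unfold k. unfold Rdiv in *. nra. }
  set (T := (Rabs (l2 * B) + 1) / k).
  assert (HT : 0 < T) by (unfold T; apply Rdiv_lt_0_compat; [pose proof (Rabs_pos (l2 * B)); lra | lra]).
  specialize (Hg T ltac:(lra)). specialize (HB T ltac:(lra)). specialize (Hhi T ltac:(lra)).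
  assert (k * (T - 0) = Rabs (l2 * B) + 1) by (unfold T; field; lra).
  pose proof (Rle_abs (l2 * B)). nra.
Qed.

(** * Lyapunov and Chetaev criteria for system (3) *)

Definition sqnorm3 (x y z : R) : R := x ^ 2 + y ^ 2 + z ^ 2.

Lemma sqnorm3_nonneg x y z : 0 <= sqnorm3 x y z.
Proof. unfold sqnorm3. pose proof (pow2_ge_0 x). pose proof (pow2_ge_0 y). pose proof (pow2_ge_0 z). lra. Qed.

Lemma dist3_lt_iff a b c a' b' c' d : 0 < d ->
  dist3 a b c a' b' c' < d <-> sqnorm3 (a - a') (b - b') (c - c') < d ^ 2.
Proof.
  intros Hd. unfold dist3. fold (sqnorm3 (a - a') (b - b') (c - c')).
  pose proof (sqnorm3_nonneg (a - a') (b - b') (c - c')). split; intros H'.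
  - rewrite <- (pow2_sqrt (sqnorm3 _ _ _)) by auto. pose proof (sqrt_pos (sqnorm3 (a - a') (b - b') (c - c'))). nra.
  - rewrite <- (sqrt_pow2 d) by lra. apply sqrt_lt_1_alt. split; auto.
Qed.

Lemma sqnorm3_lt_abs x y z m : sqnorm3 x y z < m -> Rabs x <= sqrt m /\ Rabs y <= sqrt m /\ Rabs z <= sqrt m.
Proof.
  unfold sqnorm3. intros H.
  pose proof (pow2_ge_0 x). pose proof (pow2_ge_0 y). pose proof (pow2_ge_0 z).
  assert (Hb : forall v, v ^ 2 <= m -> Rabs v <= sqrt m).
  { intros v Hv. rewrite <- (sqrt_pow2 (Rabs v)) by apply Rabs_pos. rewrite pow2_abs.
    apply sqrt_le_1_alt. exact Hv. }
  repeat split; apply Hb; lra.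
Qed.

Lemma is_derive_shift (f : R -> R) t l e : is_derive f t l -> is_derive (fun s => f s - e) t l.
Proof.
  intros H. replace l with (l - 0) by ring.
  apply (is_derive_minus (K := R_AbsRing) (V := R_NormedModule)); auto.
  apply (is_derive_const (K := R_AbsRing) (V := R_NormedModule)).
Qed.

Section LyapunovStability.

Variables (P : Params) (Se Ime Ise : R).
Variables (W : R -> R -> R -> R) (DW : R -> R -> R -> R -> R -> R -> R) (l1 l2 c m : R).
Hypotheses (l1_pos : 0 < l1) (l2_pos : 0 < l2) (c_pos : 0 < c) (m_pos : 0 < m).
Hypothesis W_chain : forall (x y z : R -> R) (t dx dy dz : R),
  is_derive x t dx -> is_derive y t dy -> is_derive z t dz ->
  is_derive (fun s => W (x s) (y s) (z s)) t (DW (x t) (y t) (z t) dx dy dz).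
Hypothesis W_bounds : forall x y z, l1 * sqnorm3 x y z <= W x y z /\ W x y z <= l2 * sqnorm3 x y z.
Hypothesis W_decay : forall x y z, sqnorm3 x y z < m ->
  DW x y z (fS P (Se + x) (Ime + y) (Ise + z)) (fIm P (Se + x) (Ime + y) (Ise + z))
    (fIs P (Se + x) (Ime + y) (Ise + z)) <= - c * sqnorm3 x y z.

Definition dev_W (S Im Is : R -> R) (t : R) : R := W (S t - Se) (Im t - Ime) (Is t - Ise).
Definition dev_sq (S Im Is : R -> R) (t : R) : R := sqnorm3 (S t - Se) (Im t - Ime) (Is t - Ise).

(* Curves that follow (3) while they are in the region [dev_sq < m], e.g. solutions of a clamped field. *)
Lemma lyapunov_trapping (S Im Is dS dIm dIs : R -> R) :
  (forall t, 0 <= t -> is_derive S t (dS t) /\ is_derive Im t (dIm t) /\ is_derive Is t (dIs t)) ->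
  (forall t, 0 <= t -> dev_sq S Im Is t < m ->
     dS t = fS P (S t) (Im t) (Is t) /\ dIm t = fIm P (S t) (Im t) (Is t) /\ dIs t = fIs P (S t) (Im t) (Is t)) ->
  dev_W S Im Is 0 < l1 * m ->
  (forall t, 0 <= t -> l1 * dev_sq S Im Is t <= dev_W S Im Is 0) /\
  (forall eta, 0 < eta -> exists T, forall t, T <= t -> dev_W S Im Is t < eta).
Proof.
  intros Hd Hf H0.
  assert (Hdec : forall t, 0 <= t -> dev_sq S Im Is t < m ->
    DW (S t - Se) (Im t - Ime) (Is t - Ise) (dS t) (dIm t) (dIs t) <= - c * dev_sq S Im Is t).
  { intros t Ht Hp. destruct (Hf t Ht Hp) as [-> [-> ->]].
    specialize (W_decay _ _ _ Hp). replace (Se + (S t - Se)) with (S t) in W_decay by ring.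
    replace (Ime + (Im t - Ime)) with (Im t) in W_decay by ring.
    replace (Ise + (Is t - Ise)) with (Is t) in W_decay by ring. exact W_decay. }
  destruct (lyapunov_decay (dev_W S Im Is)
    (fun t => DW (S t - Se) (Im t - Ime) (Is t - Ise) (dS t) (dIm t) (dIs t)) (dev_sq S Im Is) l1 l2 c m)
    as [Hmax Hlim]; auto.
  - intros t Ht. destruct (Hd t Ht) as [H1 [H2 H3]]. unfold dev_W.
    apply (W_chain (fun s => S s - Se) (fun s => Im s - Ime) (fun s => Is s - Ise)); apply is_derive_shift; auto.
  - intros t Ht. apply W_bounds.
  - intros t Ht. apply sqnorm3_nonneg.
  - split; auto. intros t Ht. specialize (Hmax t Ht). pose proof (W_bounds (S t - Se) (Im t - Ime) (Is t - Ise)).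
    unfold dev_W, dev_sq in *. lra.
Qed.

Lemma lyapunov_trapping_solution (S Im Is : R -> R) :
  is_solution P S Im Is -> dev_W S Im Is 0 < l1 * m ->
  (forall t, 0 <= t -> l1 * dev_sq S Im Is t <= dev_W S Im Is 0) /\
  (forall eta, 0 < eta -> exists T, forall t, T <= t -> dev_W S Im Is t < eta).
Proof.
  intros Hs H0. apply (lyapunov_trapping S Im Is (fun t => fS P (S t) (Im t) (Is t))
    (fun t => fIm P (S t) (Im t) (Is t)) (fun t => fIs P (S t) (Im t) (Is t))); auto.
Qed.

Lemma dev_W_le (S Im Is : R -> R) t : dev_W S Im Is t <= l2 * dev_sq S Im Is t.
Proof. apply W_bounds. Qed.

Lemma solution_exists_of_W_small S0 Im0 Is0 : W (S0 - Se) (Im0 - Ime) (Is0 - Ise) < l1 * m ->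
  exists S Im Is, is_solution P S Im Is /\ S 0 = S0 /\ Im 0 = Im0 /\ Is 0 = Is0.
Proof.
  intros HW0.
  destruct (clamped_solution_exists P Se Ime Ise (sqrt m) S0 Im0 Is0 (sqrt_pos m))
    as [S [Im [Is [E1 [E2 [E3 Hd]]]]]].
  assert (Hin : forall t, dev_sq S Im Is t < m ->
    clamp Se (sqrt m) (S t) = S t /\ clamp Ime (sqrt m) (Im t) = Im t /\ clamp Ise (sqrt m) (Is t) = Is t).
  { intros t Hp. apply sqnorm3_lt_abs in Hp. destruct Hp as [B1 [B2 B3]]. rewrite !clamp_id; auto. }
  destruct (lyapunov_trapping S Im Is _ _ _ Hd) as [Hbound _].
  { intros t Ht Hp. destruct (Hin t Hp) as [-> [-> ->]]. auto. }
  { unfold dev_W. rewrite E1, E2, E3. exact HW0. }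
  exists S, Im, Is. split; [|auto]. intros t Ht.
  assert (Hp : dev_sq S Im Is t < m).
  { apply Rmult_lt_reg_l with l1; auto. specialize (Hbound t Ht). unfold dev_W in Hbound.
    rewrite E1, E2, E3 in Hbound. lra. }
  destruct (Hin t Hp) as [C1 [C2 C3]]. destruct (Hd t Ht) as [D1 [D2 D3]].
  rewrite C1, C2, C3 in *. auto.
Qed.

Lemma lyap_stable_of_lyapunov : lyap_stable P (Se, Ime, Ise).
Proof.
  red; cbv iota beta. intros eps Heps.
  assert (He2 : 0 < eps ^ 2) by (apply pow_lt; lra).
  set (B := Rmin (l1 * m) (l1 * eps ^ 2) / 2).
  assert (HB : 0 < B) by (unfold B; apply Rdiv_lt_0_compat; [apply Rmin_case; apply Rmult_lt_0_compat | ]; lra).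
  assert (HB1 : B < l1 * m) by (unfold B; pose proof (Rmin_l (l1 * m) (l1 * eps ^ 2)); nra).
  assert (HB2 : B < l1 * eps ^ 2) by (unfold B; pose proof (Rmin_r (l1 * m) (l1 * eps ^ 2)); nra).
  assert (Hd : 0 < sqrt (B / l2)) by (apply sqrt_lt_R0, Rdiv_lt_0_compat; lra).
  exists (sqrt (B / l2)). split; auto.
  intros S0 Im0 Is0 Hdist. apply dist3_lt_iff in Hdist; auto.
  rewrite pow2_sqrt in Hdist by (left; apply Rdiv_lt_0_compat; lra).
  assert (HW0 : W (S0 - Se) (Im0 - Ime) (Is0 - Ise) < B).
  { eapply Rle_lt_trans; [apply W_bounds|].
    apply Rmult_lt_reg_l with (/ l2); [apply Rinv_0_lt_compat; lra|].
    replace (/ l2 * (l2 * sqnorm3 (S0 - Se) (Im0 - Ime) (Is0 - Ise))) with (sqnorm3 (S0 - Se) (Im0 - Ime) (Is0 - Ise))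
      by (field; lra).
    unfold Rdiv in Hdist. lra. }
  split; [apply solution_exists_of_W_small; lra|].
  intros S Im Is Hs E1 E2 E3 t Ht.
  assert (H0 : dev_W S Im Is 0 < B) by (unfold dev_W; rewrite E1, E2, E3; exact HW0).
  destruct (lyapunov_trapping_solution S Im Is Hs ltac:(lra)) as [Hbound _].
  specialize (Hbound t Ht). apply dist3_lt_iff; auto.
  apply Rmult_lt_reg_l with l1; auto. unfold dev_sq in Hbound. lra.
Qed.

Lemma attractive_of_lyapunov : attractive P (Se, Ime, Ise).
Proof.
  red; cbv iota beta.
  assert (Hpos : 0 < l1 * m / (2 * l2)) by (apply Rdiv_lt_0_compat; nra).
  exists (sqrt (l1 * m / (2 * l2))). split; [apply sqrt_lt_R0; auto|].
  intros S Im Is Hs Hdist. apply dist3_lt_iff in Hdist; [|apply sqrt_lt_R0; auto].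
  rewrite pow2_sqrt in Hdist by lra.
  assert (H0 : dev_W S Im Is 0 < l1 * m).
  { eapply Rle_lt_trans; [apply dev_W_le|]. unfold dev_sq.
    apply Rmult_lt_reg_l with (/ l2); [apply Rinv_0_lt_compat; lra|].
    replace (/ l2 * (l2 * sqnorm3 (S 0 - Se) (Im 0 - Ime) (Is 0 - Ise))) with (sqnorm3 (S 0 - Se) (Im 0 - Ime) (Is 0 - Ise))
      by (field; lra).
    replace (/ l2 * (l1 * m)) with (2 * (l1 * m / (2 * l2))) by (field; lra). lra. }
  destruct (lyapunov_trapping_solution S Im Is Hs H0) as [_ Hlim].
  apply is_lim_spec. intros eps. simpl.
  destruct (Hlim (l1 * eps ^ 2)) as [T HT]; [apply Rmult_lt_0_compat; [lra | apply pow_lt, cond_pos]|].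
  exists T. intros t Ht. rewrite Rminus_0_r, Rabs_right by (unfold dist3; apply Rle_ge, sqrt_pos).
  apply dist3_lt_iff; [apply cond_pos|]. apply Rmult_lt_reg_l with l1; auto.
  specialize (HT t ltac:(lra)). pose proof (W_bounds (S t - Se) (Im t - Ime) (Is t - Ise)).
  unfold dev_W in HT. lra.
Qed.

Theorem loc_asym_stable_of_lyapunov : loc_asym_stable P (Se, Ime, Ise).
Proof. split; [apply lyap_stable_of_lyapunov | apply attractive_of_lyapunov]. Qed.

End LyapunovStability.

Section ChetaevInstability.

Variables (P : Params) (Se Ime Ise : R).
Variables (W : R -> R -> R -> R) (DW : R -> R -> R -> R -> R -> R -> R) (l2 c m : R).
Hypotheses (l2_pos : 0 < l2) (c_pos : 0 < c) (m_pos : 0 < m).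
Hypothesis W_chain : forall (x y z : R -> R) (t dx dy dz : R),
  is_derive x t dx -> is_derive y t dy -> is_derive z t dz ->
  is_derive (fun s => W (x s) (y s) (z s)) t (DW (x t) (y t) (z t) dx dy dz).
Hypothesis W_upper : forall x y z, W x y z <= l2 * sqnorm3 x y z.
Hypothesis W_positive_near_0 : forall d, 0 < d -> exists x y z, sqnorm3 x y z < d /\ 0 < W x y z.
Hypothesis W_growth : forall x y z, sqnorm3 x y z < m ->
  c * sqnorm3 x y z <= DW x y z (fS P (Se + x) (Ime + y) (Ise + z)) (fIm P (Se + x) (Ime + y) (Ise + z))
    (fIs P (Se + x) (Ime + y) (Ise + z)).

Theorem unstable_of_chetaev : unstable P (Se, Ime, Ise).
Proof.
  intros Hst. red in Hst; cbv iota beta in Hst.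
  assert (He : 0 < sqrt (m / 2)) by (apply sqrt_lt_R0; lra).
  destruct (Hst _ He) as [d [Hd Hsol]].
  destruct (W_positive_near_0 (d ^ 2)) as [x [y [z [Hn Hw]]]]; [apply pow_lt; lra|].
  destruct (Hsol (Se + x) (Ime + y) (Ise + z)) as [[S [Im [Is [Hs [E1 [E2 E3]]]]]] Hall].
  { apply dist3_lt_iff; auto. replace (Se + x - Se) with x by ring.
    replace (Ime + y - Ime) with y by ring. replace (Ise + z - Ise) with z by ring. exact Hn. }
  specialize (Hall S Im Is Hs E1 E2 E3).
  set (p := fun t => sqnorm3 (S t - Se) (Im t - Ime) (Is t - Ise)).
  assert (Hp : forall t, 0 <= t -> p t < m / 2).
  { intros t Ht. specialize (Hall t Ht). apply dist3_lt_iff in Hall; auto.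
    rewrite pow2_sqrt in Hall by lra. exact Hall. }
  apply (chetaev_absurd (fun t => W (S t - Se) (Im t - Ime) (Is t - Ise))
    (fun t => DW (S t - Se) (Im t - Ime) (Is t - Ise) (fS P (S t) (Im t) (Is t)) (fIm P (S t) (Im t) (Is t))
                 (fIs P (S t) (Im t) (Is t))) p l2 c m); auto.
  - intros t Ht. destruct (Hs t Ht) as [D1 [D2 D3]].
    apply (W_chain (fun s => S s - Se) (fun s => Im s - Ime) (fun s => Is s - Ise)); apply is_derive_shift; auto.
  - intros t Ht. apply sqnorm3_nonneg.
  - intros t Ht. specialize (W_growth (S t - Se) (Im t - Ime) (Is t - Ise) ltac:(specialize (Hp t Ht); unfold p in Hp; lra)).
    replace (Se + (S t - Se)) with (S t) in W_growth by ring.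
    replace (Ime + (Im t - Ime)) with (Im t) in W_growth by ring.
    replace (Ise + (Is t - Ise)) with (Is t) in W_growth by ring. exact W_growth.
  - intros t Ht. specialize (Hp t Ht). lra.
  - rewrite E1, E2, E3. replace (Se + x - Se) with x by ring.
    replace (Ime + y - Ime) with y by ring. replace (Ise + z - Ise) with z by ring. exact Hw.
Qed.

End ChetaevInstability.

(** * Planar Lyapunov functions and triangular coordinates *)

Record mat2 := Mat2 { m11 : R; m12 : R; m21 : R; m22 : R }.

Definition det2 (B : mat2) : R := m11 B * m22 B - m12 B * m21 B.
Definition tr2 (B : mat2) : R := m11 B + m22 B.

(* [det B |v|^2 + |adj B v|^2]: as [adj B = tr B - B], its derivative along [v' = B v] is
   [2 tr B det B |v|^2] ([lyap2_rate]). *)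
Definition lyap2 (B : mat2) (N y : R) : R :=
  det2 B * (N ^ 2 + y ^ 2) + (m22 B * N - m12 B * y) ^ 2 + (m11 B * y - m21 B * N) ^ 2.

Definition lyap2_dN (B : mat2) (N y : R) : R :=
  det2 B * N + m22 B * (m22 B * N - m12 B * y) - m21 B * (m11 B * y - m21 B * N).
Definition lyap2_dy (B : mat2) (N y : R) : R :=
  det2 B * y - m12 B * (m22 B * N - m12 B * y) + m11 B * (m11 B * y - m21 B * N).

Lemma lyap2_rate B N y :
  lyap2_dN B N y * (m11 B * N + m12 B * y) + lyap2_dy B N y * (m21 B * N + m22 B * y)
  = tr2 B * det2 B * (N ^ 2 + y ^ 2).
Proof. unfold lyap2_dN, lyap2_dy, tr2, det2. ring. Qed.

Lemma lyap2_homogeneous B k N y : lyap2 B (k * N) (k * y) = k ^ 2 * lyap2 B N y.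
Proof. unfold lyap2. ring. Qed.

Definition lyap2_dy_bound (B : mat2) : R :=
  Rabs (- m12 B * m22 B - m11 B * m21 B) + Rabs (det2 B + m12 B ^ 2 + m11 B ^ 2).

Lemma lyap2_dy_bound_nonneg B : 0 <= lyap2_dy_bound B.
Proof.
  unfold lyap2_dy_bound. pose proof (Rabs_pos (- m12 B * m22 B - m11 B * m21 B)).
  pose proof (Rabs_pos (det2 B + m12 B ^ 2 + m11 B ^ 2)). lra.
Qed.

Lemma abs_lyap2_dy_le B N y : Rabs (lyap2_dy B N y) <= lyap2_dy_bound B * (Rabs N + Rabs y).
Proof.
  unfold lyap2_dy_bound.
  replace (lyap2_dy B N y) with ((- m12 B * m22 B - m11 B * m21 B) * N + (det2 B + m12 B ^ 2 + m11 B ^ 2) * y)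
    by (unfold lyap2_dy, det2; ring).
  eapply Rle_trans; [apply Rabs_triang|]. rewrite !Rabs_mult.
  pose proof (Rabs_pos (- m12 B * m22 B - m11 B * m21 B)). pose proof (Rabs_pos (det2 B + m12 B ^ 2 + m11 B ^ 2)).
  pose proof (Rabs_pos N). pose proof (Rabs_pos y). nra.
Qed.

Lemma lyap2_ge B N y : det2 B * (N ^ 2 + y ^ 2) <= lyap2 B N y.
Proof.
  unfold lyap2. pose proof (pow2_ge_0 (m22 B * N - m12 B * y)). pose proof (pow2_ge_0 (m11 B * y - m21 B * N)). lra.
Qed.

Definition lyap2_le_const (B : mat2) : R :=
  Rabs (det2 B) + m11 B ^ 2 + m12 B ^ 2 + m21 B ^ 2 + m22 B ^ 2.

Lemma lyap2_le_const_nonneg B : 0 <= lyap2_le_const B.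
Proof.
  unfold lyap2_le_const. pose proof (Rabs_pos (det2 B)). pose proof (pow2_ge_0 (m11 B)).
  pose proof (pow2_ge_0 (m12 B)). pose proof (pow2_ge_0 (m21 B)). pose proof (pow2_ge_0 (m22 B)). lra.
Qed.

Lemma lyap2_le B N y : lyap2 B N y <= lyap2_le_const B * (N ^ 2 + y ^ 2).
Proof.
  unfold lyap2, lyap2_le_const. pose proof (Rle_abs (det2 B)).
  assert ((m22 B ^ 2 + m12 B ^ 2) * (N ^ 2 + y ^ 2) - (m22 B * N - m12 B * y) ^ 2 = (m22 B * y + m12 B * N) ^ 2) by ring.
  assert ((m11 B ^ 2 + m21 B ^ 2) * (N ^ 2 + y ^ 2) - (m11 B * y - m21 B * N) ^ 2 = (m11 B * N + m21 B * y) ^ 2) by ring.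
  pose proof (pow2_ge_0 (m22 B * y + m12 B * N)). pose proof (pow2_ge_0 (m11 B * N + m21 B * y)).
  assert (0 <= N ^ 2 + y ^ 2) by (pose proof (pow2_ge_0 N); pose proof (pow2_ge_0 y); lra).
  assert (det2 B * (N ^ 2 + y ^ 2) <= Rabs (det2 B) * (N ^ 2 + y ^ 2)) by (apply Rmult_le_compat_r; auto).
  nra.
Qed.

Lemma lyap2_positive_somewhere B : tr2 B <> 0 -> 0 < lyap2 B 1 0 \/ 0 < lyap2 B 0 1.
Proof.
  intros H. assert (0 < tr2 B ^ 2) by (apply pow2_gt_0; auto).
  assert (lyap2 B 1 0 + lyap2 B 0 1 = tr2 B ^ 2 + (m12 B - m21 B) ^ 2) by (unfold lyap2, tr2, det2; ring).
  pose proof (pow2_ge_0 (m12 B - m21 B)).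
  destruct (Rlt_dec 0 (lyap2 B 1 0)); [left | right]; lra.
Qed.

Definition lyap_rate (B : mat2) (K q N y u dN dy du : R) : R :=
  K * (2 * (lyap2_dN B N y * dN + lyap2_dy B N y * dy)) + q * (2 * u * du).

Lemma sum_abs_mult_le N y u : (Rabs N + Rabs y) * (Rabs N + Rabs y + Rabs u) <= 3 * (N ^ 2 + y ^ 2 + u ^ 2).
Proof.
  rewrite <- (pow2_abs N), <- (pow2_abs y), <- (pow2_abs u).
  pose proof (Rabs_pos N). pose proof (Rabs_pos y). pose proof (Rabs_pos u).
  pose proof (pow2_ge_0 (Rabs N - Rabs y)). pose proof (pow2_ge_0 (Rabs N - Rabs u)).
  pose proof (pow2_ge_0 (Rabs y - Rabs u)). nra.
Qed.

Lemma abs_perturbation_le B e eta N y u : 0 <= eta ->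
  Rabs e <= eta * (Rabs N + Rabs y + Rabs u) ->
  Rabs (lyap2_dy B N y * e) <= 3 * lyap2_dy_bound B * eta * (N ^ 2 + y ^ 2 + u ^ 2).
Proof.
  intros Heta He. rewrite Rabs_mult. pose proof (abs_lyap2_dy_le B N y).
  pose proof (lyap2_dy_bound_nonneg B). pose proof (Rabs_pos (lyap2_dy B N y)). pose proof (Rabs_pos e).
  pose proof (Rabs_pos N). pose proof (Rabs_pos y). pose proof (Rabs_pos u).
  assert (Rabs (lyap2_dy B N y) * Rabs e <=
          (lyap2_dy_bound B * (Rabs N + Rabs y)) * (eta * (Rabs N + Rabs y + Rabs u))) by (apply Rmult_le_compat; auto).
  pose proof (sum_abs_mult_le N y u).
  assert (0 <= lyap2_dy_bound B * eta) by (apply Rmult_le_pos; auto).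
  nra.
Qed.

Lemma young_cross (p s v w : R) : 0 < p -> 2 * s * v * w <= s ^ 2 / p * w ^ 2 + p * v ^ 2.
Proof.
  intros Hp. apply Rmult_le_reg_l with p; auto.
  replace (p * (s ^ 2 / p * w ^ 2 + p * v ^ 2)) with (s ^ 2 * w ^ 2 + p ^ 2 * v ^ 2) by (field; lra).
  pose proof (pow2_ge_0 (s * w - p * v)). nra.
Qed.

Lemma abs_coupling_le B zeta u N y p : 0 < p ->
  Rabs (2 * lyap2_dy B N y * zeta * u) <= p * (N ^ 2 + y ^ 2) + 2 * lyap2_dy_bound B ^ 2 * zeta ^ 2 * u ^ 2 / p.
Proof.
  intros Hp. set (X := lyap2_dy B N y). set (Xm := lyap2_dy_bound B).
  pose proof (abs_lyap2_dy_le B N y) as Hb. pose proof (lyap2_dy_bound_nonneg B). fold X Xm in Hb |- *.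
  rewrite !Rabs_mult, (Rabs_right 2) by lra.
  pose proof (Rabs_pos X). pose proof (Rabs_pos zeta). pose proof (Rabs_pos u). pose proof (Rabs_pos N).
  pose proof (Rabs_pos y).
  assert (2 * Rabs X * Rabs zeta * Rabs u <= 2 * (Xm * (Rabs N + Rabs y)) * Rabs zeta * Rabs u).
  { apply Rmult_le_compat_r; auto. apply Rmult_le_compat_r; auto. lra. }
  set (s := Rabs N + Rabs y) in *. set (w := Xm * Rabs zeta * Rabs u).
  assert (s ^ 2 <= 2 * (N ^ 2 + y ^ 2)).
  { unfold s. rewrite <- (pow2_abs N), <- (pow2_abs y). pose proof (pow2_ge_0 (Rabs N - Rabs y)). nra. }
  assert (2 * s * w <= p / 2 * s ^ 2 + 2 * w ^ 2 / p).
  { apply Rmult_le_reg_l with p; auto.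
    replace (p * (p / 2 * s ^ 2 + 2 * w ^ 2 / p)) with (p ^ 2 / 2 * s ^ 2 + 2 * w ^ 2) by (field; lra).
    pose proof (pow2_ge_0 (p / 2 * s - w)). nra. }
  assert (Hw : w ^ 2 = Xm ^ 2 * zeta ^ 2 * u ^ 2) by (unfold w; rewrite <- (pow2_abs zeta), <- (pow2_abs u); ring).
  assert (p / 2 * s ^ 2 <= p * (N ^ 2 + y ^ 2)).
  { replace (p * (N ^ 2 + y ^ 2)) with (p / 2 * (2 * (N ^ 2 + y ^ 2))) by field.
    apply Rmult_le_compat_l; lra. }
  replace (2 * (Xm * s) * Rabs zeta * Rabs u) with (2 * s * w) in * by (unfold w; ring).
  replace (2 * Xm ^ 2 * zeta ^ 2 * u ^ 2 / p) with (2 * w ^ 2 / p) by (rewrite Hw; field; lra).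
  lra.
Qed.

Definition gain_planar_drives (B : mat2) (bb a : R) : R := bb ^ 2 / (a * (det2 B * - tr2 B)) + 1.

(* Decay for [(N, y)' = B (N, y) + (0, e)], [u' = bb y - a u]: the planar block drives [u], so its
   Lyapunov function gets the large weight. *)
Lemma lyap_rate_decay_planar_drives B bb a eta N y u dN dy du e :
  0 < det2 B -> tr2 B < 0 -> 0 < a -> 0 <= eta ->
  12 * gain_planar_drives B bb a * lyap2_dy_bound B * eta
    <= Rmin (gain_planar_drives B bb a * (det2 B * - tr2 B)) a ->
  dN = m11 B * N + m12 B * y -> dy = m21 B * N + m22 B * y + e -> du = bb * y - a * u ->
  Rabs e <= eta * (Rabs N + Rabs y + Rabs u) ->
  lyap_rate B (gain_planar_drives B bb a) 1 N y u dN dy du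
    <= - (Rmin (gain_planar_drives B bb a * (det2 B * - tr2 B)) a / 2) * (N ^ 2 + y ^ 2 + u ^ 2).
Proof.
  intros HD HT Ha Heta Hsmall -> -> -> He.
  set (al := det2 B * - tr2 B) in *. set (K := gain_planar_drives B bb a) in *.
  assert (Hal : 0 < al) by (unfold al; nra).
  assert (HK : K * al = bb ^ 2 / a + al) by (unfold K, gain_planar_drives; fold al; field; lra).
  assert (Hba : 0 <= bb ^ 2 / a) by (apply Rmult_le_pos; [apply pow2_ge_0 | left; apply Rinv_0_lt_compat; lra]).
  assert (HK0 : 0 < K) by (unfold K, gain_planar_drives; fold al;
    assert (0 <= bb ^ 2 / (a * al)) by (apply Rmult_le_pos; [apply pow2_ge_0 | left; apply Rinv_0_lt_compat; nra]); lra).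
  set (cl := Rmin (K * al) a) in *.
  assert (Hcl1 : cl <= K * al) by apply Rmin_l. assert (Hcl2 : cl <= a) by apply Rmin_r.
  assert (Hcl0 : 0 < cl) by (unfold cl; apply Rmin_case; nra).
  unfold lyap_rate.
  replace (K * (2 * (lyap2_dN B N y * (m11 B * N + m12 B * y) + lyap2_dy B N y * (m21 B * N + m22 B * y + e)))
           + 1 * (2 * u * (bb * y - a * u)))
    with (- 2 * (K * al) * (N ^ 2 + y ^ 2) + 2 * K * (lyap2_dy B N y * e) + 2 * bb * u * y - 2 * a * u ^ 2)
    by (unfold al, lyap2_dN, lyap2_dy, tr2, det2; ring).
  pose proof (young_cross a bb u y Ha).
  pose proof (abs_perturbation_le B e eta N y u Heta He) as Hp. pose proof (Rle_abs (lyap2_dy B N y * e)).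
  pose proof (pow2_ge_0 N). pose proof (pow2_ge_0 y). pose proof (pow2_ge_0 u).
  assert (bb ^ 2 / a * y ^ 2 <= K * al * y ^ 2) by (apply Rmult_le_compat_r; [lra | rewrite HK; lra]).
  assert (cl * (N ^ 2 + y ^ 2) <= K * al * (N ^ 2 + y ^ 2)) by (apply Rmult_le_compat_r; lra).
  assert (cl * u ^ 2 <= a * u ^ 2) by (apply Rmult_le_compat_r; lra).
  assert (2 * K * (3 * lyap2_dy_bound B * eta * (N ^ 2 + y ^ 2 + u ^ 2)) <= cl / 2 * (N ^ 2 + y ^ 2 + u ^ 2))
    by (replace (2 * K * (3 * lyap2_dy_bound B * eta * (N ^ 2 + y ^ 2 + u ^ 2)))
          with (6 * K * lyap2_dy_bound B * eta * (N ^ 2 + y ^ 2 + u ^ 2)) by ring;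
        apply Rmult_le_compat_r; lra).
  assert (K * al * N ^ 2 >= 0) by nra.
  nra.
Qed.

Definition gain_scalar_drives (B : mat2) (zeta a : R) : R :=
  lyap2_dy_bound B ^ 2 * zeta ^ 2 / (a * Rabs (det2 B * tr2 B)) + 1.

Lemma gain_scalar_drives_ge_1 B zeta a : 0 < a -> det2 B * tr2 B <> 0 -> 1 <= gain_scalar_drives B zeta a.
Proof.
  intros Ha HD. unfold gain_scalar_drives.
  assert (0 < a * Rabs (det2 B * tr2 B)) by (apply Rmult_lt_0_compat; [lra | apply Rabs_pos_lt; auto]).
  assert (0 <= lyap2_dy_bound B ^ 2 * zeta ^ 2 / (a * Rabs (det2 B * tr2 B)))
    by (apply Rmult_le_pos; [apply Rmult_le_pos; apply pow2_ge_0 | left; apply Rinv_0_lt_compat; lra]).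
  lra.
Qed.

Lemma lyap_rate_scalar_drives B zeta a q N y u dN dy du e :
  dN = m11 B * N + m12 B * y -> dy = m21 B * N + m22 B * y + zeta * u + e -> du = - a * u ->
  lyap_rate B 1 q N y u dN dy du
  = 2 * (tr2 B * det2 B * (N ^ 2 + y ^ 2)) + 2 * lyap2_dy B N y * zeta * u + 2 * (lyap2_dy B N y * e)
    - 2 * q * a * u ^ 2.
Proof. intros -> -> ->. unfold lyap_rate. rewrite <- lyap2_rate. ring. Qed.

(* Decay for [(N, y)' = B (N, y) + (0, zeta u + e)], [u' = - a u]: now [u] drives the planar block and
   gets the large weight. *)
Lemma lyap_rate_decay_scalar_drives B zeta a eta N y u dN dy du e :
  0 < det2 B -> tr2 B < 0 -> 0 < a -> 0 <= eta ->
  12 * lyap2_dy_bound B * eta <= Rmin (Rabs (det2 B * tr2 B)) a ->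
  dN = m11 B * N + m12 B * y -> dy = m21 B * N + m22 B * y + zeta * u + e -> du = - a * u ->
  Rabs e <= eta * (Rabs N + Rabs y + Rabs u) ->
  lyap_rate B 1 (gain_scalar_drives B zeta a) N y u dN dy du
    <= - (Rmin (Rabs (det2 B * tr2 B)) a / 2) * (N ^ 2 + y ^ 2 + u ^ 2).
Proof.
  intros HD HT Ha Heta Hsmall HN Hy Hu He. rewrite (lyap_rate_scalar_drives B zeta a _ _ _ _ _ _ _ e HN Hy Hu).
  assert (Habs : Rabs (det2 B * tr2 B) = det2 B * - tr2 B) by (rewrite Rabs_left by nra; ring).
  rewrite Habs in *. set (al := det2 B * - tr2 B) in *.
  assert (Hal : 0 < al) by (unfold al; nra).
  assert (Hq : 2 * gain_scalar_drives B zeta a * a = 2 * lyap2_dy_bound B ^ 2 * zeta ^ 2 / al + 2 * a)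
    by (unfold gain_scalar_drives; rewrite Habs; fold al; field; lra).
  pose proof (abs_coupling_le B zeta u N y al Hal). pose proof (Rle_abs (2 * lyap2_dy B N y * zeta * u)).
  pose proof (abs_perturbation_le B e eta N y u Heta He). pose proof (Rle_abs (lyap2_dy B N y * e)).
  set (cl := Rmin al a) in *.
  assert (Hcl1 : cl <= al) by apply Rmin_l. assert (Hcl2 : cl <= a) by apply Rmin_r.
  assert (Hcl0 : 0 < cl) by (unfold cl; apply Rmin_case; lra).
  pose proof (pow2_ge_0 N). pose proof (pow2_ge_0 y). pose proof (pow2_ge_0 u).
  assert (cl * (N ^ 2 + y ^ 2) <= al * (N ^ 2 + y ^ 2)) by (apply Rmult_le_compat_r; lra).
  assert (cl * u ^ 2 <= a * u ^ 2) by (apply Rmult_le_compat_r; lra).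
  assert (6 * lyap2_dy_bound B * eta * (N ^ 2 + y ^ 2 + u ^ 2) <= cl / 2 * (N ^ 2 + y ^ 2 + u ^ 2))
    by (apply Rmult_le_compat_r; lra).
  replace (2 * (tr2 B * det2 B * (N ^ 2 + y ^ 2))) with (- 2 * al * (N ^ 2 + y ^ 2)) by (unfold al; ring).
  replace (2 * gain_scalar_drives B zeta a * a * u ^ 2) with ((2 * gain_scalar_drives B zeta a * a) * u ^ 2) by ring.
  rewrite Hq. assert (0 <= a * u ^ 2) by nra.
  nra.
Qed.

Lemma lyap_rate_growth_scalar_drives B zeta a eta N y u dN dy du e :
  det2 B < 0 -> tr2 B < 0 -> 0 < a -> 0 <= eta ->
  12 * lyap2_dy_bound B * eta <= Rmin (Rabs (det2 B * tr2 B)) a ->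
  dN = m11 B * N + m12 B * y -> dy = m21 B * N + m22 B * y + zeta * u + e -> du = - a * u ->
  Rabs e <= eta * (Rabs N + Rabs y + Rabs u) ->
  Rmin (Rabs (det2 B * tr2 B)) a / 2 * (N ^ 2 + y ^ 2 + u ^ 2)
    <= lyap_rate B 1 (- gain_scalar_drives B zeta a) N y u dN dy du.
Proof.
  intros HD HT Ha Heta Hsmall HN Hy Hu He. rewrite (lyap_rate_scalar_drives B zeta a _ _ _ _ _ _ _ e HN Hy Hu).
  assert (Habs : Rabs (det2 B * tr2 B) = - det2 B * - tr2 B) by (rewrite Rabs_right by nra; ring).
  rewrite Habs in *. set (al := - det2 B * - tr2 B) in *.
  assert (Hal : 0 < al) by (unfold al; nra).
  assert (Hq : 2 * gain_scalar_drives B zeta a * a = 2 * lyap2_dy_bound B ^ 2 * zeta ^ 2 / al + 2 * a)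
    by (unfold gain_scalar_drives; rewrite Habs; fold al; field; lra).
  pose proof (abs_coupling_le B zeta u N y al Hal).
  pose proof (Rle_abs (- (2 * lyap2_dy B N y * zeta * u))). rewrite Rabs_Ropp in *.
  pose proof (abs_perturbation_le B e eta N y u Heta He).
  pose proof (Rle_abs (- (lyap2_dy B N y * e))). rewrite Rabs_Ropp in *.
  set (cl := Rmin al a) in *.
  assert (Hcl1 : cl <= al) by apply Rmin_l. assert (Hcl2 : cl <= a) by apply Rmin_r.
  assert (Hcl0 : 0 < cl) by (unfold cl; apply Rmin_case; lra).
  pose proof (pow2_ge_0 N). pose proof (pow2_ge_0 y). pose proof (pow2_ge_0 u).
  assert (cl * (N ^ 2 + y ^ 2) <= al * (N ^ 2 + y ^ 2)) by (apply Rmult_le_compat_r; lra).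
  assert (cl * u ^ 2 <= a * u ^ 2) by (apply Rmult_le_compat_r; lra).
  assert (6 * lyap2_dy_bound B * eta * (N ^ 2 + y ^ 2 + u ^ 2) <= cl / 2 * (N ^ 2 + y ^ 2 + u ^ 2))
    by (apply Rmult_le_compat_r; lra).
  replace (2 * (tr2 B * det2 B * (N ^ 2 + y ^ 2))) with (2 * al * (N ^ 2 + y ^ 2)) by (unfold al; ring).
  replace (2 * - gain_scalar_drives B zeta a * a * u ^ 2) with (- ((2 * gain_scalar_drives B zeta a * a) * u ^ 2)) by ring.
  rewrite Hq. assert (0 <= a * u ^ 2) by nra.
  nra.
Qed.

Definition tri_u (a d x y z : R) : R := a * (x + y) + d * z.
Definition tri_norm (a d x y z : R) : R := (x + y) ^ 2 + y ^ 2 + tri_u a d x y z ^ 2.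
Definition tri_lyap (B : mat2) (K q a d x y z : R) : R := K * lyap2 B (x + y) y + q * tri_u a d x y z ^ 2.
Definition tri_lyap_deriv (B : mat2) (K q a d x y z dx dy dz : R) : R :=
  lyap_rate B K q (x + y) y (tri_u a d x y z) (dx + dy) dy (tri_u a d dx dy dz).

Lemma is_derive_plus_R (f g : R -> R) t a b :
  is_derive f t a -> is_derive g t b -> is_derive (fun s => f s + g s) t (a + b).
Proof. intros. apply (is_derive_plus (K := R_AbsRing) (V := R_NormedModule)); auto. Qed.

Lemma is_derive_scal_R (f : R -> R) k t a : is_derive f t a -> is_derive (fun s => k * f s) t (k * a).
Proof. intros. apply is_derive_scal; auto. Qed.

Lemma is_derive_ext_R (f g : R -> R) (t l : R) :
  (forall s, f s = g s) -> is_derive f t l -> is_derive g t l.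
Proof. apply is_derive_ext. Qed.

Lemma is_derive_sq (f : R -> R) t a : is_derive f t a -> is_derive (fun s => f s ^ 2) t (2 * f t * a).
Proof.
  intros H. apply (is_derive_ext (fun s => f s * f s)); [intros; simpl; ring|].
  replace (2 * f t * a) with (a * f t + f t * a) by ring.
  apply (is_derive_mult f f t a a); auto. intros; apply Rmult_comm.
Qed.

Lemma tri_lyap_chain B K q a d (x y z : R -> R) (t dx dy dz : R) :
  is_derive x t dx -> is_derive y t dy -> is_derive z t dz ->
  is_derive (fun s => tri_lyap B K q a d (x s) (y s) (z s)) t (tri_lyap_deriv B K q a d (x t) (y t) (z t) dx dy dz).
Proof.
  intros Hx Hy Hz.
  assert (HN : is_derive (fun s => x s + y s) t (dx + dy)) by (apply is_derive_plus_R; auto).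
  assert (Hlin : forall c1 c2, is_derive (fun s => c1 * (x s + y s) + c2 * y s) t (c1 * (dx + dy) + c2 * dy))
    by (intros; apply is_derive_plus_R; apply is_derive_scal_R; auto).
  assert (Hu : is_derive (fun s => tri_u a d (x s) (y s) (z s)) t (tri_u a d dx dy dz))
    by (apply is_derive_plus_R; apply is_derive_scal_R; auto).
  apply (is_derive_ext_R (fun s => K * (det2 B * ((x s + y s) ^ 2 + y s ^ 2)
                                  + (m22 B * (x s + y s) + - m12 B * y s) ^ 2
                                  + (- m21 B * (x s + y s) + m11 B * y s) ^ 2)
                                 + q * tri_u a d (x s) (y s) (z s) ^ 2)).
  { intros s. unfold tri_lyap, lyap2. ring. }
  match goal with |- is_derive _ t ?l => replace l with
    (K * (det2 B * (2 * (x t + y t) * (dx + dy) + 2 * y t * dy)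
          + 2 * (m22 B * (x t + y t) + - m12 B * y t) * (m22 B * (dx + dy) + - m12 B * dy)
          + 2 * (- m21 B * (x t + y t) + m11 B * y t) * (- m21 B * (dx + dy) + m11 B * dy))
     + q * (2 * tri_u a d (x t) (y t) (z t) * tri_u a d dx dy dz)) end.
  - apply is_derive_plus_R; apply is_derive_scal_R; [|exact (is_derive_sq _ _ _ Hu)].
    apply is_derive_plus_R; [apply is_derive_plus_R|exact (is_derive_sq _ _ _ (Hlin _ _))].
    + apply is_derive_scal_R, is_derive_plus_R; [exact (is_derive_sq _ _ _ HN) | exact (is_derive_sq _ _ _ Hy)].
    + exact (is_derive_sq _ _ _ (Hlin _ _)).
  - unfold tri_lyap_deriv, lyap_rate, lyap2_dN, lyap2_dy, tri_u, det2. ring.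
Qed.

Definition tri_kappa (a d : R) : R := 3 + 3 * a ^ 2 + 3 * d ^ 2 + 2 * (1 + a ^ 2) / d ^ 2.

Lemma tri_kappa_pos a d : 0 < d -> 0 < tri_kappa a d.
Proof.
  intros Hd. unfold tri_kappa. pose proof (pow2_ge_0 a). pose proof (pow2_ge_0 d).
  assert (0 <= 2 * (1 + a ^ 2) / d ^ 2)
    by (apply Rmult_le_pos; [lra | left; apply Rinv_0_lt_compat, pow_lt; lra]).
  lra.
Qed.

Lemma tri_norm_equiv a d x y z : 0 < d ->
  sqnorm3 x y z <= tri_kappa a d * tri_norm a d x y z /\ tri_norm a d x y z <= tri_kappa a d * sqnorm3 x y z.
Proof.
  intros Hd. unfold sqnorm3, tri_norm, tri_u.
  set (kap := tri_kappa a d). set (N := x + y). set (u := a * N + d * z).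
  assert (Hx : x = N - y) by (unfold N; ring). assert (Hz : z = (u - a * N) / d) by (unfold u, N; field; lra).
  assert (Hd2 : 0 < d ^ 2) by (apply pow_lt; lra).
  pose proof (pow2_ge_0 N). pose proof (pow2_ge_0 y). pose proof (pow2_ge_0 u). pose proof (pow2_ge_0 x).
  pose proof (pow2_ge_0 z). pose proof (pow2_ge_0 a). pose proof (pow2_ge_0 d).
  assert (Hfrac : 0 <= 2 / d ^ 2) by (apply Rmult_le_pos; [lra | left; apply Rinv_0_lt_compat; lra]).
  assert (Hfrac' : 0 <= 2 * a ^ 2 / d ^ 2) by (apply Rmult_le_pos; [nra | left; apply Rinv_0_lt_compat; lra]).
  assert (Hk1 : 3 + 2 * a ^ 2 / d ^ 2 + 2 / d ^ 2 <= kap).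
  { unfold kap, tri_kappa. replace (2 * (1 + a ^ 2) / d ^ 2) with (2 * a ^ 2 / d ^ 2 + 2 / d ^ 2) by (field; lra). lra. }
  assert (Hk2 : 3 + 3 * a ^ 2 + 3 * d ^ 2 <= kap).
  { unfold kap, tri_kappa. assert (0 <= 2 * (1 + a ^ 2) / d ^ 2)
      by (apply Rmult_le_pos; [lra | left; apply Rinv_0_lt_compat; lra]). lra. }
  split.
  - assert (x ^ 2 <= 2 * N ^ 2 + 2 * y ^ 2) by (rewrite Hx; pose proof (pow2_ge_0 (N + y)); nra).
    assert (z ^ 2 <= 2 * u ^ 2 / d ^ 2 + 2 * a ^ 2 / d ^ 2 * N ^ 2).
    { rewrite Hz. replace (((u - a * N) / d) ^ 2) with ((u - a * N) ^ 2 / d ^ 2) by (field; lra).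
      replace (2 * u ^ 2 / d ^ 2 + 2 * a ^ 2 / d ^ 2 * N ^ 2) with ((2 * u ^ 2 + 2 * a ^ 2 * N ^ 2) / d ^ 2)
        by (field; lra).
      apply Rmult_le_compat_r; [left; apply Rinv_0_lt_compat; lra|]. pose proof (pow2_ge_0 (u + a * N)). nra. }
    assert ((3 + 2 * a ^ 2 / d ^ 2 + 2 / d ^ 2) * (N ^ 2 + y ^ 2 + u ^ 2) <= kap * (N ^ 2 + y ^ 2 + u ^ 2))
      by (apply Rmult_le_compat_r; lra).
    unfold Rdiv in *. nra.
  - assert (N ^ 2 <= 2 * x ^ 2 + 2 * y ^ 2) by (unfold N; pose proof (pow2_ge_0 (x - y)); nra).
    assert (u ^ 2 <= 3 * (a ^ 2 * x ^ 2 + a ^ 2 * y ^ 2 + d ^ 2 * z ^ 2)).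
    { unfold u, N. pose proof (pow2_ge_0 (a * x - a * y)). pose proof (pow2_ge_0 (a * x - d * z)).
      pose proof (pow2_ge_0 (a * y - d * z)). nra. }
    assert ((3 + 3 * a ^ 2 + 3 * d ^ 2) * (x ^ 2 + y ^ 2 + z ^ 2) <= kap * (x ^ 2 + y ^ 2 + z ^ 2))
      by (apply Rmult_le_compat_r; lra).
    assert (0 <= a ^ 2 * z ^ 2) by (apply Rmult_le_pos; lra).
    assert (0 <= d ^ 2 * x ^ 2) by (apply Rmult_le_pos; lra). assert (0 <= d ^ 2 * y ^ 2) by (apply Rmult_le_pos; lra).
    nra.
Qed.

Lemma abs_lt_of_sq_lt v r : 0 < r -> v ^ 2 < r ^ 2 -> Rabs v < r.
Proof. intros Hr H. rewrite <- pow2_abs in H. pose proof (Rabs_pos v). nra. Qed.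

Lemma tri_norm_small a d x y z r : 0 < r -> tri_norm a d x y z < r ^ 2 ->
  Rabs (x + y) < r /\ Rabs y < r /\ Rabs (tri_u a d x y z) < r /\ Rabs x < 2 * r.
Proof.
  intros Hr Hp. unfold tri_norm in Hp.
  pose proof (pow2_ge_0 (x + y)). pose proof (pow2_ge_0 y). pose proof (pow2_ge_0 (tri_u a d x y z)).
  assert (HN : Rabs (x + y) < r) by (apply abs_lt_of_sq_lt; auto; lra).
  assert (Hy : Rabs y < r) by (apply abs_lt_of_sq_lt; auto; lra).
  assert (Hu : Rabs (tri_u a d x y z) < r) by (apply abs_lt_of_sq_lt; auto; lra).
  assert (Rabs x <= Rabs (x + y) + Rabs y)
    by (replace x with ((x + y) + - y) at 1 by ring; rewrite <- (Rabs_Ropp y); apply Rabs_triang).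
  repeat split; lra.
Qed.

Lemma tri_norm_lt_of_sqnorm3_lt a d x y z r : 0 < d ->
  sqnorm3 x y z < r ^ 2 / tri_kappa a d -> tri_norm a d x y z < r ^ 2.
Proof.
  intros Hd Hn. pose proof (tri_kappa_pos a d Hd). destruct (tri_norm_equiv a d x y z Hd) as [_ H2].
  apply Rle_lt_trans with (tri_kappa a d * sqnorm3 x y z); auto.
  apply Rmult_lt_reg_r with (/ tri_kappa a d); [apply Rinv_0_lt_compat; lra|].
  replace (tri_kappa a d * sqnorm3 x y z * / tri_kappa a d) with (sqnorm3 x y z) by (field; lra). exact Hn.
Qed.

Lemma sqnorm3_div_le_tri_norm a d x y z : 0 < d -> sqnorm3 x y z / tri_kappa a d <= tri_norm a d x y z.
Proof.
  intros Hd. pose proof (tri_kappa_pos a d Hd). destruct (tri_norm_equiv a d x y z Hd) as [H1 _].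
  apply Rmult_le_reg_l with (tri_kappa a d); auto. field_simplify; lra.
Qed.

Theorem loc_asym_stable_of_tri_lyap P Se Ime Ise B K q a d l1 l2 c r :
  0 < d -> 0 < l1 -> 0 < c -> 0 < r ->
  (forall N y u, l1 * (N ^ 2 + y ^ 2 + u ^ 2) <= K * lyap2 B N y + q * u ^ 2 <= l2 * (N ^ 2 + y ^ 2 + u ^ 2)) ->
  (forall x y z, tri_norm a d x y z < r ^ 2 ->
     tri_lyap_deriv B K q a d x y z (fS P (Se + x) (Ime + y) (Ise + z)) (fIm P (Se + x) (Ime + y) (Ise + z))
       (fIs P (Se + x) (Ime + y) (Ise + z)) <= - c * tri_norm a d x y z) ->
  loc_asym_stable P (Se, Ime, Ise).
Proof.
  intros Hd Hl1 Hc Hr Hb Hdec.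
  pose proof (tri_kappa_pos a d Hd) as Hk. set (kap := tri_kappa a d) in *.
  assert (Hl2 : l1 <= l2) by (destruct (Hb 1 0 0); lra).
  apply (loc_asym_stable_of_lyapunov P Se Ime Ise (tri_lyap B K q a d) (tri_lyap_deriv B K q a d)
    (l1 / kap) (l2 * kap) (c / kap) (r ^ 2 / kap)).
  - apply Rdiv_lt_0_compat; lra.
  - nra.
  - apply Rdiv_lt_0_compat; lra.
  - apply Rdiv_lt_0_compat; [apply pow_lt|]; lra.
  - intros; apply tri_lyap_chain; auto.
  - intros x y z. destruct (tri_norm_equiv a d x y z Hd) as [H1 H2]. fold kap in H1, H2.
    destruct (Hb (x + y) y (tri_u a d x y z)) as [H3 H4]. unfold tri_lyap.
    unfold tri_norm in H1, H2. pose proof (sqnorm3_nonneg x y z). split.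
    + apply Rle_trans with (l1 * ((x + y) ^ 2 + y ^ 2 + tri_u a d x y z ^ 2)); auto.
      unfold Rdiv. rewrite Rmult_assoc. apply Rmult_le_compat_l; [lra|].
      apply Rmult_le_reg_l with kap; auto. field_simplify; lra.
    + eapply Rle_trans; [apply H4|]. rewrite Rmult_assoc. apply Rmult_le_compat_l; lra.
  - intros x y z Hn. pose proof (tri_norm_lt_of_sqnorm3_lt a d x y z r Hd Hn) as Hn'.
    pose proof (sqnorm3_div_le_tri_norm a d x y z Hd). fold kap in H.
    eapply Rle_trans; [apply Hdec; auto|].
    replace (- (c / kap) * sqnorm3 x y z) with (- c * (sqnorm3 x y z / kap)) by (field; lra). nra.
Qed.

Theorem unstable_of_tri_lyap P Se Ime Ise B K q a d l2 c r :
  0 < d -> 0 < l2 -> 0 < c -> 0 < r ->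
  (forall N y u, K * lyap2 B N y + q * u ^ 2 <= l2 * (N ^ 2 + y ^ 2 + u ^ 2)) ->
  (exists N y, 0 < K * lyap2 B N y) ->
  (forall x y z, tri_norm a d x y z < r ^ 2 ->
     c * tri_norm a d x y z <= tri_lyap_deriv B K q a d x y z (fS P (Se + x) (Ime + y) (Ise + z))
       (fIm P (Se + x) (Ime + y) (Ise + z)) (fIs P (Se + x) (Ime + y) (Ise + z))) ->
  unstable P (Se, Ime, Ise).
Proof.
  intros Hd Hl2 Hc Hr Hb [N0 [y0 Hpos]] Hgrow.
  pose proof (tri_kappa_pos a d Hd) as Hk. set (kap := tri_kappa a d) in *.
  apply (unstable_of_chetaev P Se Ime Ise (tri_lyap B K q a d) (tri_lyap_deriv B K q a d)
    (l2 * kap) (c / kap) (r ^ 2 / kap)).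
  - nra.
  - apply Rdiv_lt_0_compat; lra.
  - apply Rdiv_lt_0_compat; [apply pow_lt|]; lra.
  - intros; apply tri_lyap_chain; auto.
  - intros x y z. destruct (tri_norm_equiv a d x y z Hd) as [_ H2]. fold kap in H2.
    unfold tri_lyap. eapply Rle_trans; [apply Hb|]. unfold tri_norm in H2.
    rewrite Rmult_assoc. apply Rmult_le_compat_l; lra.
  - (* points [k (N0 - y0, y0, - a N0 / d)] have tri-coordinates [(k N0, k y0, 0)] *)
    intros del Hdel. set (s0 := sqnorm3 (N0 - y0) y0 (- a * N0 / d)).
    pose proof (sqnorm3_nonneg (N0 - y0) y0 (- a * N0 / d)). fold s0 in H.
    set (k := sqrt (del / (2 * (s0 + 1)))).
    assert (Hk2 : k ^ 2 = del / (2 * (s0 + 1))) by (apply pow2_sqrt; left; apply Rdiv_lt_0_compat; lra).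
    assert (Hk0 : 0 < k) by (apply sqrt_lt_R0, Rdiv_lt_0_compat; lra).
    exists (k * (N0 - y0)), (k * y0), (k * (- a * N0 / d)). split.
    + replace (sqnorm3 (k * (N0 - y0)) (k * y0) (k * (- a * N0 / d))) with (k ^ 2 * s0) by (unfold s0, sqnorm3; ring).
      rewrite Hk2. apply Rmult_lt_reg_l with (2 * (s0 + 1)); [lra|].
      replace (2 * (s0 + 1) * (del / (2 * (s0 + 1)) * s0)) with (del * s0) by (field; lra). nra.
    + unfold tri_lyap. unfold tri_u.
      replace (k * (N0 - y0) + k * y0) with (k * N0) by ring.
      replace (a * (k * N0) + d * (k * (- a * N0 / d))) with 0 by (field; lra).
      rewrite lyap2_homogeneous. pose proof (pow_lt k 2 Hk0). nra.
  - intros x y z Hn. pose proof (tri_norm_lt_of_sqnorm3_lt a d x y z r Hd Hn) as Hn'.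
    pose proof (sqnorm3_div_le_tri_norm a d x y z Hd). fold kap in H.
    eapply Rle_trans; [|apply Hgrow; auto].
    replace (c / kap * sqnorm3 x y z) with (c * (sqnorm3 x y z / kap)) by (field; lra). nra.
Qed.

(** * Equilibria below and above the capacity *)

Lemma fS_plus_fIm_shift P Se Ime Ise x y z :
  fS P (Se + x) (Ime + y) (Ise + z) + fIm P (Se + x) (Ime + y) (Ise + z)
  = fS P Se Ime Ise + fIm P Se Ime Ise + (- pmu P * (x + y) - (pbeta P + prho P) * y).
Proof. unfold fS, fIm. ring. Qed.

Lemma fIm_shift_below P Se Ime Ise x y z : Ise <= pCI P -> Ise + z <= pCI P ->
  fIm P (Se + x) (Ime + y) (Ise + z)
  = fIm P Se Ime Ise + (psm P * Se - (pmu P + prho P + pbeta P)) * y + psm P * Ime * x + psm P * x * y.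
Proof. intros H1 H2. unfold fIm, posp. rewrite !Rmax_left by lra. ring. Qed.

Lemma fIs_shift_below P Se Ime Ise x y z : Ise < pCI P -> Ise + z < pCI P ->
  fIs P (Se + x) (Ime + y) (Ise + z) = fIs P Se Ime Ise + pbeta P * y - (pr P + pmu P) * z.
Proof.
  intros H1 H2. unfold fIs, Tr. destruct (Rlt_dec Ise (pCI P)); [|lra].
  destruct (Rlt_dec (Ise + z) (pCI P)); [ring | lra].
Qed.

Lemma fIm_shift_above P Se Ime Ise x y z : pCI P <= Ise -> pCI P <= Ise + z ->
  fIm P (Se + x) (Ime + y) (Ise + z)
  = fIm P Se Ime Ise + (psm P * Ime + pss P * (Ise - pCI P)) * x
    + (psm P * Se - (pmu P + prho P + pbeta P)) * y + pss P * Se * z + (psm P * x * y + pss P * x * z).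
Proof. intros H1 H2. unfold fIm, posp. rewrite !Rmax_right by lra. ring. Qed.

Lemma fIs_shift_above P Se Ime Ise x y z : pCI P <= Ise -> pCI P <= Ise + z ->
  fIs P (Se + x) (Ime + y) (Ise + z) = fIs P Se Ime Ise + pbeta P * y - pmu P * z.
Proof.
  intros H1 H2. unfold fIs, Tr. destruct (Rlt_dec Ise (pCI P)); [lra|].
  destruct (Rlt_dec (Ise + z) (pCI P)); [lra | ring].
Qed.

Lemma abs_mult_dev_le x y u w eta : Rabs w <= eta ->
  Rabs (x * w) <= eta * (Rabs (x + y) + Rabs y + Rabs u).
Proof.
  intros Hw. rewrite Rabs_mult.
  assert (Rabs x <= Rabs (x + y) + Rabs y)
    by (replace x with ((x + y) + - y) at 1 by ring; rewrite <- (Rabs_Ropp y); apply Rabs_triang).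
  pose proof (Rabs_pos x). pose proof (Rabs_pos w). pose proof (Rabs_pos u). nra.
Qed.

Lemma lyap_quad_ge B K q N y u : 0 < det2 B -> 0 < K -> 0 < q ->
  Rmin (K * det2 B) q * (N ^ 2 + y ^ 2 + u ^ 2) <= K * lyap2 B N y + q * u ^ 2.
Proof.
  intros HD HK Hq. pose proof (lyap2_ge B N y).
  pose proof (pow2_ge_0 N). pose proof (pow2_ge_0 y). pose proof (pow2_ge_0 u).
  pose proof (Rmin_l (K * det2 B) q). pose proof (Rmin_r (K * det2 B) q).
  assert (Rmin (K * det2 B) q * (N ^ 2 + y ^ 2) <= K * det2 B * (N ^ 2 + y ^ 2)) by (apply Rmult_le_compat_r; lra).
  assert (Rmin (K * det2 B) q * u ^ 2 <= q * u ^ 2) by (apply Rmult_le_compat_r; lra).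
  assert (K * (det2 B * (N ^ 2 + y ^ 2)) <= K * lyap2 B N y) by (apply Rmult_le_compat_l; lra).
  replace (Rmin (K * det2 B) q * (N ^ 2 + y ^ 2 + u ^ 2))
    with (Rmin (K * det2 B) q * (N ^ 2 + y ^ 2) + Rmin (K * det2 B) q * u ^ 2) by ring.
  lra.
Qed.

Lemma lyap_quad_le B K q N y u : 0 <= K ->
  K * lyap2 B N y + q * u ^ 2 <= (K * lyap2_le_const B + Rabs q) * (N ^ 2 + y ^ 2 + u ^ 2).
Proof.
  intros HK. pose proof (lyap2_le B N y). pose proof (lyap2_le_const_nonneg B).
  pose proof (pow2_ge_0 N). pose proof (pow2_ge_0 y). pose proof (pow2_ge_0 u). pose proof (Rle_abs q).
  pose proof (Rabs_pos q).
  assert (K * lyap2 B N y <= K * (lyap2_le_const B * (N ^ 2 + y ^ 2))) by (apply Rmult_le_compat_l; lra).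
  assert (q * u ^ 2 <= Rabs q * u ^ 2) by (apply Rmult_le_compat_r; lra).
  assert (0 <= K * lyap2_le_const B * u ^ 2) by (apply Rmult_le_pos; [apply Rmult_le_pos|]; lra).
  assert (0 <= Rabs q * (N ^ 2 + y ^ 2)) by (apply Rmult_le_pos; lra).
  lra.
Qed.

(* Shrinking the neighbourhood makes the quadratic nonlinearity a small multiple of the linear part. *)
Lemma small_radius_exists (cl C bound : R) : 0 < cl -> 0 <= C -> 0 < bound ->
  exists r, 0 < r /\ r <= bound /\ 12 * C * r <= cl.
Proof.
  intros Hcl HC Hb. exists (Rmin (cl / (12 * C + 1)) bound). repeat split.
  - apply Rmin_case; [apply Rdiv_lt_0_compat|]; lra.
  - apply Rmin_r.
  - pose proof (Rmin_l (cl / (12 * C + 1)) bound).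
    assert (0 < Rmin (cl / (12 * C + 1)) bound) by (apply Rmin_case; [apply Rdiv_lt_0_compat|]; lra).
    apply Rle_trans with (12 * C * (cl / (12 * C + 1))); [apply Rmult_le_compat_l; lra|].
    apply Rmult_le_reg_r with (12 * C + 1); [lra|].
    replace (12 * C * (cl / (12 * C + 1)) * (12 * C + 1)) with (12 * C * cl) by (field; lra). nra.
Qed.

Definition lower_jacobian (P : Params) (Ime : R) : mat2 :=
  Mat2 (- pmu P) (- (pbeta P + prho P)) (psm P * Ime) (- (psm P * Ime)).

(* Below the capacity [C_I] the variables [(S + I_m, I_m)] form a closed planar system driving [I_s]. *)
Theorem loc_asym_stable_below_threshold P Se Ime Ise : params_pos P ->
  fS P Se Ime Ise = 0 -> fIm P Se Ime Ise = 0 -> fIs P Se Ime Ise = 0 ->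
  0 < Ime -> Ise < pCI P -> loc_asym_stable P (Se, Ime, Ise).
Proof.
  intros [HA [Hsm [Hss [Hmu [Hrho [Hbe [Hr HCI]]]]]]] E0 E1 E2 HIm HIs.
  assert (HSe : psm P * Se = pmu P + prho P + pbeta P).
  { unfold fIm, posp in E1. rewrite Rmax_left in E1 by lra.
    apply Rmult_eq_reg_r with Ime; [|lra]. lra. }
  assert (Hgam : 0 < psm P * Ime) by nra.
  set (B := lower_jacobian P Ime).
  assert (HD : 0 < det2 B) by (unfold B, lower_jacobian, det2; simpl; nra).
  assert (HT : tr2 B < 0) by (unfold B, lower_jacobian, tr2; simpl; nra).
  set (a := pr P + pmu P).
  set (K := gain_planar_drives B (pbeta P) a).
  assert (HK : 0 < K).
  { unfold K, gain_planar_drives.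
    assert (0 <= pbeta P ^ 2 / (a * (det2 B * - tr2 B)))
      by (apply Rmult_le_pos; [apply pow2_ge_0 | left; apply Rinv_0_lt_compat;
          apply Rmult_lt_0_compat; [unfold a; lra | nra]]).
    lra. }
  set (cl := Rmin (K * (det2 B * - tr2 B)) a).
  assert (Hcl : 0 < cl) by (unfold cl, a; apply Rmin_case; [apply Rmult_lt_0_compat; nra | lra]).
  assert (HC : 0 <= K * lyap2_dy_bound B * psm P)
    by (pose proof (lyap2_dy_bound_nonneg B); apply Rmult_le_pos; [apply Rmult_le_pos|]; lra).
  destruct (small_radius_exists cl _ ((pCI P - Ise) / 2) Hcl HC ltac:(lra)) as [r [Hr0 [Hr1 Hr2]]].
  apply (loc_asym_stable_of_tri_lyap P Se Ime Ise B K 1 0 1 (Rmin (K * det2 B) 1)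
           (K * lyap2_le_const B + Rabs 1) (cl / 2) r); try lra.
  - apply Rmin_case; nra.
  - intros N y u. split; [apply lyap_quad_ge | apply lyap_quad_le]; lra.
  - intros x y z Hn. destruct (tri_norm_small 0 1 x y z r Hr0 Hn) as [HN [Hy [Hu Hx]]].
    replace (tri_u 0 1 x y z) with z in Hu by (unfold tri_u; ring).
    assert (Hz : Ise + z < pCI P) by (revert Hu; unfold Rabs; destruct Rcase_abs; lra).
    unfold tri_lyap_deriv, tri_norm.
    apply (lyap_rate_decay_planar_drives B (pbeta P) a (psm P * r) _ _ _ _ _ _ (psm P * x * y)); auto.
    + unfold a; lra.
    + nra.
    + fold K. fold cl. lra.
    + rewrite fS_plus_fIm_shift, E0, E1. unfold B, lower_jacobian; simpl. ring.
    + rewrite fIm_shift_below, E1, HSe by lra. unfold B, lower_jacobian; simpl. ring.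
    + unfold tri_u. rewrite fIs_shift_below, E2 by lra. unfold a. ring.
    + replace (psm P * x * y) with (x * (psm P * y)) by ring. apply abs_mult_dev_le.
      rewrite Rabs_mult, (Rabs_right (psm P)) by lra. apply Rmult_le_compat_l; lra.
Qed.

Definition infection_force (P : Params) (Ime Ise : R) : R := psm P * Ime + pss P * (Ise - pCI P).

Definition upper_jacobian (P : Params) (Se Ime Ise : R) : mat2 :=
  Mat2 (- pmu P) (- (pbeta P + prho P))
       (infection_force P Ime Ise - pss P * Se * pbeta P / (pbeta P + prho P))
       (psm P * Se - (pmu P + prho P + pbeta P) - infection_force P Ime Ise).

Lemma det2_upper_jacobian P Se Ime Ise : params_pos P ->
  fS P Se Ime Ise = 0 -> fIm P Se Ime Ise = 0 -> pCI P <= Ise ->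
  det2 (upper_jacobian P Se Ime Ise) * Se
  = (pmu P + pbeta P + prho P) * pA P - (pmu P * psm P + pbeta P * pss P) * Se ^ 2.
Proof.
  intros [HA [Hsm [Hss [Hmu [Hrho [Hbe [Hr HCI]]]]]]] E0 E1 HIs.
  unfold fS, fIm, posp in E0, E1. rewrite Rmax_right in E0, E1 by lra.
  assert (HL : infection_force P Ime Ise * Se = (pmu P + prho P + pbeta P) * Ime)
    by (unfold infection_force; lra).
  assert (HI : (pmu P + prho P + pbeta P) * Ime = pA P - pmu P * Se) by lra.
  replace (det2 (upper_jacobian P Se Ime Ise) * Se) with
    (pmu P * (pmu P + prho P + pbeta P) * Se - pmu P * psm P * Se ^ 2 - pbeta P * pss P * Se ^ 2
     + (pmu P + prho P + pbeta P) * (infection_force P Ime Ise * Se))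
    by (unfold det2, upper_jacobian; simpl; field; lra).
  rewrite HL, HI. ring.
Qed.

Lemma tr2_upper_jacobian_neg P Se Ime Ise : params_pos P ->
  fIm P Se Ime Ise = 0 -> 0 < Se -> 0 < Ime -> pCI P < Ise -> tr2 (upper_jacobian P Se Ime Ise) < 0.
Proof.
  intros [HA [Hsm [Hss [Hmu [Hrho [Hbe [Hr HCI]]]]]]] E1 HS HIm HIs.
  unfold fIm, posp in E1. rewrite Rmax_right in E1 by lra.
  assert (0 < pss P * Se * (Ise - pCI P)) by (apply Rmult_lt_0_compat; [apply Rmult_lt_0_compat|]; lra).
  assert (0 < (pmu P + prho P + pbeta P - psm P * Se) * Ime) by lra.
  assert (0 < pmu P + prho P + pbeta P - psm P * Se) by nra.
  assert (0 < infection_force P Ime Ise) by (unfold infection_force; nra).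
  unfold tr2, upper_jacobian; simpl. lra.
Qed.

(* Above [C_I] the combination [u = beta (S + I_m) + (beta + rho) I_s] decays on its own, [u' = - mu u],
   and drives the planar block [(S + I_m, I_m)]. *)
Lemma above_threshold_local_field P Se Ime Ise cl : params_pos P ->
  fS P Se Ime Ise = 0 -> fIm P Se Ime Ise = 0 -> fIs P Se Ime Ise = 0 -> pCI P < Ise -> 0 < cl ->
  exists r eta, 0 < r /\ 0 <= eta /\ 12 * lyap2_dy_bound (upper_jacobian P Se Ime Ise) * eta <= cl /\
    forall x y z, tri_norm (pbeta P) (pbeta P + prho P) x y z < r ^ 2 ->
      let B := upper_jacobian P Se Ime Ise in
      let u := tri_u (pbeta P) (pbeta P + prho P) x y z in
      fS P (Se + x) (Ime + y) (Ise + z) + fIm P (Se + x) (Ime + y) (Ise + z) = m11 B * (x + y) + m12 B * y /\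
      fIm P (Se + x) (Ime + y) (Ise + z)
        = m21 B * (x + y) + m22 B * y + pss P * Se / (pbeta P + prho P) * u + (psm P * x * y + pss P * x * z) /\
      tri_u (pbeta P) (pbeta P + prho P) (fS P (Se + x) (Ime + y) (Ise + z)) (fIm P (Se + x) (Ime + y) (Ise + z))
        (fIs P (Se + x) (Ime + y) (Ise + z)) = - pmu P * u /\
      Rabs (psm P * x * y + pss P * x * z) <= eta * (Rabs (x + y) + Rabs y + Rabs u).
Proof.
  intros Hpos E0 E1 E2 HIs Hcl. pose proof Hpos as [HA [Hsm [Hss [Hmu [Hrho [Hbe [Hr HCI]]]]]]].
  set (d := pbeta P + prho P). assert (Hd : 0 < d) by (unfold d; lra).
  set (C := psm P + pss P * (1 + pbeta P) / d).
  assert (HC : 0 <= C) by (unfold C; assert (0 <= pss P * (1 + pbeta P) / d)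
    by (apply Rmult_le_pos; [nra | left; apply Rinv_0_lt_compat; lra]); lra).
  pose proof (lyap2_dy_bound_nonneg (upper_jacobian P Se Ime Ise)) as HX.
  destruct (small_radius_exists cl (lyap2_dy_bound (upper_jacobian P Se Ime Ise) * C)
              (d * (Ise - pCI P) / (2 * (1 + pbeta P))) Hcl ltac:(nra)) as [r [Hr0 [Hr1 Hr2]]].
  { apply Rdiv_lt_0_compat; nra. }
  exists r, (C * r). split; [lra|]. split; [nra|]. split; [lra|].
  intros x y z Hn B u. destruct (tri_norm_small _ _ x y z r Hr0 Hn) as [HN [Hy [Hu Hx]]]. fold u in Hu.
  assert (Hz : Rabs z <= (1 + pbeta P) * r / d).
  { replace z with ((u - pbeta P * (x + y)) / d) by (unfold u, tri_u, d; field; lra).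
    unfold Rdiv. rewrite Rabs_mult, (Rabs_right (/ d)) by (left; apply Rinv_0_lt_compat; lra).
    apply Rmult_le_compat_r; [left; apply Rinv_0_lt_compat; lra|].
    eapply Rle_trans; [apply Rabs_triang|]. rewrite Rabs_Ropp, Rabs_mult, (Rabs_right (pbeta P)) by lra. nra. }
  assert (Hz' : (1 + pbeta P) * r / d <= (Ise - pCI P) / 2).
  { replace ((1 + pbeta P) * r / d) with (r * ((1 + pbeta P) / d)) by (field; lra).
    apply Rle_trans with (d * (Ise - pCI P) / (2 * (1 + pbeta P)) * ((1 + pbeta P) / d)).
    - apply Rmult_le_compat_r; [left; apply Rdiv_lt_0_compat; lra | exact Hr1].
    - right. field. lra. }
  assert (HIz : pCI P <= Ise + z) by (revert Hz Hz'; unfold Rabs; destruct Rcase_abs; lra).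
  repeat split.
  - rewrite fS_plus_fIm_shift, E0, E1. unfold B, upper_jacobian; simpl. fold d. ring.
  - rewrite fIm_shift_above, E1 by lra. unfold B, upper_jacobian, u, tri_u, infection_force; simpl. fold d.
    field. lra.
  - unfold tri_u. rewrite fS_plus_fIm_shift, E0, E1, fIs_shift_above, E2 by lra.
    unfold u, tri_u, d. ring.
  - replace (psm P * x * y + pss P * x * z) with (x * (psm P * y + pss P * z)) by ring. apply abs_mult_dev_le.
    eapply Rle_trans; [apply Rabs_triang|]. rewrite !Rabs_mult, (Rabs_right (psm P)), (Rabs_right (pss P)) by lra.
    unfold C. assert (psm P * Rabs y <= psm P * r) by (apply Rmult_le_compat_l; lra).
    assert (pss P * Rabs z <= pss P * ((1 + pbeta P) * r / d)) by (apply Rmult_le_compat_l; lra).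
    replace ((psm P + pss P * (1 + pbeta P) / d) * r) with (psm P * r + pss P * ((1 + pbeta P) * r / d)) by (field; lra).
    lra.
Qed.

Theorem loc_asym_stable_above_threshold P Se Ime Ise : params_pos P ->
  fS P Se Ime Ise = 0 -> fIm P Se Ime Ise = 0 -> fIs P Se Ime Ise = 0 -> 0 < Se -> 0 < Ime -> pCI P < Ise ->
  (pmu P * psm P + pbeta P * pss P) * Se ^ 2 < (pmu P + pbeta P + prho P) * pA P ->
  loc_asym_stable P (Se, Ime, Ise).
Proof.
  intros Hpos E0 E1 E2 HS HIm HIs Hsq. pose proof Hpos as [HA [Hsm [Hss [Hmu [Hrho [Hbe [Hr HCI]]]]]]].
  set (B := upper_jacobian P Se Ime Ise).
  assert (HD : 0 < det2 B).
  { pose proof (det2_upper_jacobian P Se Ime Ise Hpos E0 E1 ltac:(lra)). fold B in H. nra. }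
  assert (HT : tr2 B < 0) by (apply tr2_upper_jacobian_neg; auto).
  set (zeta := pss P * Se / (pbeta P + prho P)).
  set (q := gain_scalar_drives B zeta (pmu P)).
  assert (Hq : 1 <= q) by (apply gain_scalar_drives_ge_1; [lra | nra]).
  set (cl := Rmin (Rabs (det2 B * tr2 B)) (pmu P)).
  assert (Hcl : 0 < cl) by (unfold cl; apply Rmin_case; [apply Rabs_pos_lt; nra | lra]).
  destruct (above_threshold_local_field P Se Ime Ise cl Hpos E0 E1 E2 HIs Hcl) as [r [eta [Hr0 [Heta [Hsmall Hloc]]]]].
  apply (loc_asym_stable_of_tri_lyap P Se Ime Ise B 1 q (pbeta P) (pbeta P + prho P) (Rmin (1 * det2 B) q)
           (1 * lyap2_le_const B + Rabs q) (cl / 2) r); try lra.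
  - apply Rmin_case; lra.
  - intros N y u. split; [apply lyap_quad_ge | apply lyap_quad_le]; lra.
  - intros x y z Hn. pose proof (Hloc x y z Hn) as Hl. cbv zeta in Hl. destruct Hl as [HdN [Hdy [Hdu He]]].
    unfold tri_lyap_deriv, tri_norm.
    exact (lyap_rate_decay_scalar_drives B zeta (pmu P) eta _ _ _ _ _ _ _ HD HT Hmu Heta Hsmall HdN Hdy Hdu He).
Qed.

Theorem unstable_above_threshold P Se Ime Ise : params_pos P ->
  fS P Se Ime Ise = 0 -> fIm P Se Ime Ise = 0 -> fIs P Se Ime Ise = 0 -> 0 < Se -> 0 < Ime -> pCI P < Ise ->
  (pmu P + pbeta P + prho P) * pA P < (pmu P * psm P + pbeta P * pss P) * Se ^ 2 ->
  unstable P (Se, Ime, Ise).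
Proof.
  intros Hpos E0 E1 E2 HS HIm HIs Hsq. pose proof Hpos as [HA [Hsm [Hss [Hmu [Hrho [Hbe [Hr HCI]]]]]]].
  set (B := upper_jacobian P Se Ime Ise).
  assert (HD : det2 B < 0).
  { pose proof (det2_upper_jacobian P Se Ime Ise Hpos E0 E1 ltac:(lra)). fold B in H. nra. }
  assert (HT : tr2 B < 0) by (apply tr2_upper_jacobian_neg; auto).
  set (zeta := pss P * Se / (pbeta P + prho P)).
  set (q := gain_scalar_drives B zeta (pmu P)).
  assert (Hq : 1 <= q) by (apply gain_scalar_drives_ge_1; [lra | nra]).
  set (cl := Rmin (Rabs (det2 B * tr2 B)) (pmu P)).
  assert (Hcl : 0 < cl) by (unfold cl; apply Rmin_case; [apply Rabs_pos_lt; nra | lra]).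
  destruct (above_threshold_local_field P Se Ime Ise cl Hpos E0 E1 E2 HIs Hcl) as [r [eta [Hr0 [Heta [Hsmall Hloc]]]]].
  pose proof (lyap2_le_const_nonneg B) as HLc.
  apply (unstable_of_tri_lyap P Se Ime Ise B 1 (- q) (pbeta P) (pbeta P + prho P)
           (1 * lyap2_le_const B + Rabs (- q)) (cl / 2) r); try lra.
  - rewrite Rabs_Ropp, Rabs_right by lra. lra.
  - intros N y u. apply lyap_quad_le; lra.
  - destruct (lyap2_positive_somewhere B ltac:(lra)); [exists 1, 0 | exists 0, 1]; lra.
  - intros x y z Hn. pose proof (Hloc x y z Hn) as Hl. cbv zeta in Hl. destruct Hl as [HdN [Hdy [Hdu He]]].
    unfold tri_lyap_deriv, tri_norm.
    exact (lyap_rate_growth_scalar_drives B zeta (pmu P) eta _ _ _ _ _ _ _ HD HT Hmu Heta Hsmall HdN Hdy Hdu He).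
Qed.

Lemma Estar_below_threshold P : params_pos P ->
  1 < Rnum P < 1 + psm P * (pmu P + pr P) / (pmu P * pbeta P) * pCI P ->
  let '(Se, Ime, Ise) := Estar P in
  fS P Se Ime Ise = 0 /\ fIm P Se Ime Ise = 0 /\ fIs P Se Ime Ise = 0 /\ 0 < Ime /\ Ise < pCI P.
Proof.
  intros [HA [Hsm [Hss [Hmu [Hrho [Hbe [Hr HCI]]]]]]] [HR1 HR2]. unfold Estar.
  assert (HIs : pmu P * pbeta P * (Rnum P - 1) / (psm P * (pmu P + pr P)) < pCI P).
  { apply Rmult_lt_reg_r with (psm P * (pmu P + pr P)); [nra|].
    replace (pmu P * pbeta P * (Rnum P - 1) / (psm P * (pmu P + pr P)) * (psm P * (pmu P + pr P)))
      with (pmu P * pbeta P * (Rnum P - 1)) by (field; lra).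
    apply Rmult_lt_compat_l with (r := pmu P * pbeta P) in HR2; [|nra].
    replace (pmu P * pbeta P * (1 + psm P * (pmu P + pr P) / (pmu P * pbeta P) * pCI P))
      with (pmu P * pbeta P + pCI P * (psm P * (pmu P + pr P))) in HR2 by (field; lra).
    lra. }
  assert (HRn : Rnum P * (pmu P * (pmu P + pbeta P + prho P)) = pA P * psm P) by (unfold Rnum; field; nra).
  unfold fS, fIm, fIs, posp, Tr. rewrite Rmax_left by lra. destruct (Rlt_dec _ (pCI P)); [|lra].
  repeat split; auto.
  - transitivity ((pA P * psm P - Rnum P * (pmu P * (pmu P + pbeta P + prho P))) / psm P); [field; lra|].
    rewrite HRn. field. lra.
  - field. lra.
  - field. lra.
  - apply Rdiv_lt_0_compat; [apply Rmult_lt_0_compat|]; lra.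
Qed.

Lemma Stwo_minus_Sone P : psm P <> 0 -> Stwo P - Sone P = (pmu P + pbeta P + prho P) / psm P * sqrt (Defs.disc P).
Proof. intros H. unfold Stwo, Sone. field. auto. Qed.

Lemma Sone_mult_Stwo P : params_pos P -> 0 <= Defs.disc P ->
  (pmu P * psm P + pbeta P * pss P) * (Sone P * Stwo P) = (pmu P + pbeta P + prho P) * pA P.
Proof.
  intros [HA [Hsm [Hss [Hmu [Hrho [Hbe [Hr HCI]]]]]]] Hd.
  assert (Hs : sqrt (Defs.disc P) ^ 2 = Defs.disc P) by (apply pow2_sqrt; auto).
  unfold Sone, Stwo.
  replace ((pmu P + pbeta P + prho P) / (2 * psm P) * (Rnum P - pp P + qq P - sqrt (Defs.disc P)) *
           ((pmu P + pbeta P + prho P) / (2 * psm P) * (Rnum P - pp P + qq P + sqrt (Defs.disc P))))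
    with (((pmu P + pbeta P + prho P) / (2 * psm P)) ^ 2 * ((Rnum P - pp P + qq P) ^ 2 - sqrt (Defs.disc P) ^ 2))
    by ring.
  rewrite Hs. unfold Defs.disc, pp, qq, Rnum. field. repeat split; nra.
Qed.

Lemma fS_plus_fIm_Ei P S : params_pos P -> fS P S (Im_of P S) (Is_of P S) + fIm P S (Im_of P S) (Is_of P S) = 0.
Proof.
  intros [HA [Hsm [Hss [Hmu [Hrho [Hbe [Hr HCI]]]]]]]. unfold fS, fIm, Im_of, Rnum. field. split; nra.
Qed.

Lemma fIs_Ei P S : params_pos P -> pCI P <= Is_of P S -> fIs P S (Im_of P S) (Is_of P S) = 0.
Proof.
  intros [HA [Hsm [Hss [Hmu [Hrho [Hbe [Hr HCI]]]]]]] H. unfold fIs, Tr.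
  destruct (Rlt_dec (Is_of P S) (pCI P)); [lra|]. unfold Is_of, Im_of. field. split; nra.
Qed.

Lemma fIm_Ei P S : params_pos P -> 0 <= Defs.disc P -> pCI P <= Is_of P S ->
  (pmu P + pbeta P + prho P) * fIm P S (Im_of P S) (Is_of P S)
  = - (pmu P * psm P + pbeta P * pss P) * ((S - Sone P) * (S - Stwo P)).
Proof.
  intros Hpos Hd H. pose proof Hpos as [HA [Hsm [Hss [Hmu [Hrho [Hbe [Hr HCI]]]]]]].
  pose proof (Sone_mult_Stwo P Hpos Hd) as Hprod.
  replace ((S - Sone P) * (S - Stwo P)) with (S ^ 2 - (Sone P + Stwo P) * S + Sone P * Stwo P) by ring.
  replace (Sone P * Stwo P) with ((pmu P + pbeta P + prho P) * pA P / (pmu P * psm P + pbeta P * pss P))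
    by (rewrite <- Hprod; field; nra).
  replace (Sone P + Stwo P) with ((pmu P + pbeta P + prho P) / psm P * (Rnum P - pp P + qq P))
    by (unfold Sone, Stwo; field; lra).
  unfold fIm, posp. rewrite Rmax_right by lra. unfold Im_of, Is_of, pp, qq, Rnum. field. repeat split; nra.
Qed.

Lemma Ei_equilibrium P S : params_pos P -> endemic_Ei P S -> S = Sone P \/ S = Stwo P ->
  fS P S (Im_of P S) (Is_of P S) = 0 /\ fIm P S (Im_of P S) (Is_of P S) = 0 /\ fIs P S (Im_of P S) (Is_of P S) = 0.
Proof.
  intros Hpos [Hd [HS [HIm HIs]]] Hroot. pose proof Hpos as [HA [Hsm [Hss [Hmu [Hrho [Hbe [Hr HCI]]]]]]].
  assert (HIm0 : fIm P S (Im_of P S) (Is_of P S) = 0).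
  { pose proof (fIm_Ei P S Hpos Hd ltac:(lra)) as H.
    destruct Hroot as [-> | ->]; rewrite Rminus_diag in H;
      [rewrite Rmult_0_l in H | rewrite Rmult_0_r in H]; rewrite Rmult_0_r in H;
      apply Rmult_integral in H; destruct H; lra. }
  pose proof (fS_plus_fIm_Ei P S Hpos). split; [lra | split; [auto | apply fIs_Ei; auto; lra]].
Qed.

Lemma Sone_lt_Stwo P : params_pos P -> Sone P <> Stwo P -> Sone P < Stwo P.
Proof.
  intros [HA [Hsm [Hss [Hmu [Hrho [Hbe [Hr HCI]]]]]]] Hne.
  pose proof (Stwo_minus_Sone P ltac:(lra)) as H. pose proof (sqrt_pos (Defs.disc P)).
  assert (0 < (pmu P + pbeta P + prho P) / psm P) by (apply Rdiv_lt_0_compat; lra).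
  destruct (Req_dec (Stwo P - Sone P) 0); [exfalso; apply Hne; lra | nra].
Qed.

Theorem theorem3p2 (P : Params) (Hpos : params_pos P) :
  (1 < Rnum P < 1 + psm P * (pmu P + pr P) / (pmu P * pbeta P) * pCI P ->
     loc_asym_stable P (Estar P)) /\
  (endemic_Ei P (Sone P) -> Sone P <> Stwo P -> loc_asym_stable P (Eone P)) /\
  (endemic_Ei P (Stwo P) -> Sone P <> Stwo P -> unstable P (Etwo P)).
Proof.
  pose proof Hpos as [HA [Hsm [Hss [Hmu [Hrho [Hbe [Hr HCI]]]]]]].
  assert (HQ : 0 < pmu P * psm P + pbeta P * pss P) by nra.
  split; [|split].
  - intros HR. pose proof (Estar_below_threshold P Hpos HR) as H.
    destruct (Estar P) as [[Se Ime] Ise]. destruct H as [E0 [E1 [E2 [HIm HIs]]]].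
    apply loc_asym_stable_below_threshold; auto.
  - intros HE Hne. destruct (Ei_equilibrium P (Sone P) Hpos HE (or_introl eq_refl)) as [E0 [E1 E2]].
    pose proof (Sone_lt_Stwo P Hpos Hne). destruct HE as [Hd [HS [HIm HIs]]].
    apply loc_asym_stable_above_threshold; auto.
    rewrite <- (Sone_mult_Stwo P Hpos Hd).
    assert (0 < (pmu P * psm P + pbeta P * pss P) * (Sone P * (Stwo P - Sone P))) by (apply Rmult_lt_0_compat; nra).
    nra.
  - intros HE Hne. destruct (Ei_equilibrium P (Stwo P) Hpos HE (or_intror eq_refl)) as [E0 [E1 E2]].
    pose proof (Sone_lt_Stwo P Hpos Hne). destruct HE as [Hd [HS [HIm HIs]]].
    apply unstable_above_threshold; auto.
    rewrite <- (Sone_mult_Stwo P Hpos Hd).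
    assert (0 < (pmu P * psm P + pbeta P * pss P) * (Stwo P * (Stwo P - Sone P))) by (apply Rmult_lt_0_compat; nra).
    nra.
Qed.
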